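(* Let $H$ satisfy Condition (H). If $(x,p)\in\mathbb K\times\mathbb R$ is such that $t_{x,p}<\infty$, then $\lim_{t\uparrow t_{x,p}}(X_t^{x,p},P_t^{x,p})$ exists and is either $(\partial_-,-\infty)$ or $(\partial_+,+\infty)$.
   Context: $\mathbb K$ is either $\mathbb R$ or $[-1,1]$, with interior $\mathbb K^\circ$; $\partial_-=-\infty,\partial_+=+\infty$ if $\mathbb K=\mathbb R$ and $\partial_-=-1,\partial_+=1$ if $\mathbb K=[-1,1]$. The Lagrangian is $\mathcal L(x,v)=\sup_p(pv-H(x,p))$. The Hamilton equations are $\dot X=\partial_pH(X,P)$, $\dot P=-\partial_xH(X,P)$; $(X_s^{x,p},P_s^{x,p})$ is the solution from $(x,p)$ on its maximal interval of existence $[0,t_{x,p})$ (for $\mathbb K=[-1,1]$, maximality within $[-1,1]\times\mathbb R$). Condition (H) on $H:\mathbb K\times\mathbb R\to\mathbb R$: $H(x,0)=0$ for all $x$, and (H1) $H$ is $C^2$ with $\partial_p^2H>0$ on $\mathbb K\times\mathbb R$; if $\mathbb K=[-1,1]$, $H$ is the restriction of a $C^2$ function on $(-1-\epsilon,1+\epsilon)\times\mathbb R$ for some $\epsilon>0$. (H2) for every compact $K\subseteq\mathbb K^\circ$ there is $\theta_K:[0,\infty)\to[0,\infty)$ with $\theta_K(r)/r\to\infty$ as $r\to\infty$; for every $M\ge0$ a constant $k_M$ with $\theta_K(r+m)\le k_M(1+\theta_K(r))$ for all $m\in[0,M]$, $r\ge0$; constants $c_K,C_K$ with $\mathcal L(x,v)\ge\theta_K(|v|)-c_K$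 and $|\partial_x\mathcal L(x,v)|+|\partial_v\mathcal L(x,v)|\le C_K\theta_K(|v|)$ for all $x\in K,v\in\mathbb R$. (H3) for each compact $K\subseteq\mathbb K^\circ$, $\lim_{|p|\to\infty}\inf_{x\in K}H(x,p)/|p|=\infty$; if $\mathbb K=[-1,1]$ moreover $\lim_{p\to\infty}H(-1,p)/p=\infty$ and $\lim_{p\to-\infty}H(1,p)/(-p)=\infty$. (H4) $\lim_{x\to\partial_-}\operatorname{argmin}_pH(x,p)=-\infty$ and $\lim_{x\to\partial_+}\operatorname{argmin}_pH(x,p)=+\infty$. (H5) there are $(y_n^+,q_n^+)\in\mathbb K^\circ\times(0,\infty)$ converging to $(\partial_+,+\infty)$ with $\partial_pH(y_n^+,q)\ge0$ for $q\ge q_n^+$ and $-\partial_xH(y,q_n^+)\ge0$ for $y\ge y_n^+$, and $(y_n^-,q_n^-)\in\mathbb K^\circ\times(-\infty,0)$ converging to $(\partial_-,-\infty)$ with $\partial_pH(y_n^-,q)\le0$ for $q\le q_n^-$ and $-\partial_xH(y,q_n^-)\le0$ for $y\le y_n^-$. *)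

From Stdlib Require Import Reals Lra Rtopology ClassicalEpsilon.
Open Scope R_scope.

(* The domain K: [bnd = true] means K = [-1,1], [bnd = false] means K = R. *)
Definition Kdom (bnd : bool) (x : R) : Prop := if bnd then -1 <= x <= 1 else True.
Definition Kint (bnd : bool) (x : R) : Prop := if bnd then -1 < x < 1 else True.

(* Open domain on which H is C^2: R for K = R, (-1-eps, 1+eps) for K = [-1,1]. *)
Definition Udom (bnd : bool) (eps : R) (x : R) : Prop :=
  if bnd then -1 - eps < x < 1 + eps else True.

Definition cont2_at (U : R -> Prop) (f : R -> R -> R) (x p : R) : Prop :=
  forall e, 0 < e -> exists d, 0 < d /\
    forall y q, U y -> Rabs (y - x) < d -> Rabs (q - p) < d ->
      Rabs (f y q - f x p) < e.

Definition C2_on (U : R -> Prop) (H Hx Hp Hxx Hxp Hpx Hpp : R -> R -> R) : Prop :=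
  forall x p, U x ->
    derivable_pt_lim (fun y => H y p) x (Hx x p) /\
    derivable_pt_lim (fun q => H x q) p (Hp x p) /\
    derivable_pt_lim (fun y => Hx y p) x (Hxx x p) /\
    derivable_pt_lim (fun q => Hx x q) p (Hxp x p) /\
    derivable_pt_lim (fun y => Hp y p) x (Hpx x p) /\
    derivable_pt_lim (fun q => Hp x q) p (Hpp x p) /\
    cont2_at U H x p /\ cont2_at U Hx x p /\ cont2_at U Hp x p /\
    cont2_at U Hxx x p /\ cont2_at U Hxp x p /\ cont2_at U Hpx x p /\
    cont2_at U Hpp x p.

(* Lagrangian L(x,v) = sup_p (p v - H(x,p)) (a least upper bound, chosen
   classically; it exists whenever the set is bounded above). *)
Definition Lag (H : R -> R -> R) (x v : R) : R :=
  epsilon (inhabits 0) (fun l => is_lub (fun y => exists p, y = p * v - H x p) l).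

Definition is_argmin (H : R -> R -> R) (x q : R) : Prop :=
  forall p, H x q <= H x p.

(* "Eventually as x -> ∂_- (resp. ∂_+) within K°". *)
Definition ev_lo (bnd : bool) (P : R -> Prop) : Prop :=
  if bnd then exists d, 0 < d /\ forall x, -1 < x < -1 + d -> P x
  else exists A, forall x, x < A -> P x.
Definition ev_hi (bnd : bool) (P : R -> Prop) : Prop :=
  if bnd then exists d, 0 < d /\ forall x, 1 - d < x < 1 -> P x
  else exists A, forall x, A < x -> P x.

Definition seq_to_lo (bnd : bool) (u : nat -> R) : Prop :=
  if bnd then Un_cv u (-1) else cv_infty (fun n => - u n).
Definition seq_to_hi (bnd : bool) (u : nat -> R) : Prop :=
  if bnd then Un_cv u 1 else cv_infty u.

Definition cpt_in_int (bnd : bool) (Ks : R -> Prop) : Prop :=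
  compact Ks /\ forall x, Ks x -> Kint bnd x.

Definition CondH0 (bnd : bool) (H : R -> R -> R) : Prop :=
  forall x, Kdom bnd x -> H x 0 = 0.

Definition CondH1 (bnd : bool) (H Hx Hp : R -> R -> R) : Prop :=
  exists eps Hxx Hxp Hpx Hpp, 0 < eps /\
    C2_on (Udom bnd eps) H Hx Hp Hxx Hxp Hpx Hpp /\
    (forall x p, Kdom bnd x -> 0 < Hpp x p).

Definition CondH2 (bnd : bool) (H : R -> R -> R) : Prop :=
  forall Ks, cpt_in_int bnd Ks ->
  exists theta : R -> R,
    (forall r, 0 <= r -> 0 <= theta r) /\
    (forall M, exists A, forall r, A < r -> 0 < r /\ M < theta r / r) /\
    (forall M, 0 <= M -> exists k, forall m r, 0 <= m <= M -> 0 <= r ->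
        theta (r + m) <= k * (1 + theta r)) /\
    exists c C,
      forall x v, Ks x ->
        theta (Rabs v) - c <= Lag H x v /\
        exists a b,
          derivable_pt_lim (fun y => Lag H y v) x a /\
          derivable_pt_lim (fun w => Lag H x w) v b /\
          Rabs a + Rabs b <= C * theta (Rabs v).

Definition CondH3 (bnd : bool) (H : R -> R -> R) : Prop :=
  (forall Ks, cpt_in_int bnd Ks ->
     forall M, exists A, forall p x, A < Rabs p -> Ks x -> M < H x p / Rabs p) /\
  (if bnd then
     (forall M, exists A, forall p, A < p -> M < H (-1) p / p) /\
     (forall M, exists A, forall p, p < A -> M < H 1 p / (- p))
   else True).

Definition CondH4 (bnd : bool) (H : R -> R -> R) : Prop :=
  (forall M, ev_lo bnd (fun x => forall q, is_argmin H x q -> q < - M)) /\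
  (forall M, ev_hi bnd (fun x => forall q, is_argmin H x q -> M < q)).

Definition CondH5 (bnd : bool) (Hx Hp : R -> R -> R) : Prop :=
  (exists yp qp : nat -> R,
     (forall n, Kint bnd (yp n) /\ 0 < qp n) /\
     seq_to_hi bnd yp /\ cv_infty qp /\
     (forall n q, qp n <= q -> 0 <= Hp (yp n) q) /\
     (forall n y, Kdom bnd y -> yp n <= y -> 0 <= - Hx y (qp n))) /\
  (exists ym qm : nat -> R,
     (forall n, Kint bnd (ym n) /\ qm n < 0) /\
     seq_to_lo bnd ym /\ cv_infty (fun n => - qm n) /\
     (forall n q, q <= qm n -> Hp (ym n) q <= 0) /\
     (forall n y, Kdom bnd y -> y <= ym n -> - Hx y (qm n) <= 0)).

Definition CondH (bnd : bool) (H Hx Hp : R -> R -> R) : Prop :=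
  CondH0 bnd H /\ CondH1 bnd H Hx Hp /\ CondH2 bnd H /\ CondH3 bnd H /\
  CondH4 bnd H /\ CondH5 bnd Hx Hp.

Definition ham_sol (bnd : bool) (Hx Hp : R -> R -> R) (x p T : R)
    (X P : R -> R) : Prop :=
  X 0 = x /\ P 0 = p /\
  (forall s, 0 <= s < T -> Kdom bnd (X s)) /\
  (forall s, 0 < s < T ->
     derivable_pt_lim X s (Hp (X s) (P s)) /\
     derivable_pt_lim P s (- Hx (X s) (P s))) /\
  (forall e, 0 < e -> exists d, 0 < d /\ forall s, 0 <= s < d -> s < T ->
     Rabs (X s - x) < e /\ Rabs (P s - p) < e).

Definition ham_maximal (bnd : bool) (Hx Hp : R -> R -> R) (x p T : R)
    (X P : R -> R) : Prop :=
  ham_sol bnd Hx Hp x p T X P /\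
  ~ (exists T' X' P', T < T' /\ ham_sol bnd Hx Hp x p T' X' P').

Definition lim_left (f : R -> R) (T l : R) : Prop :=
  forall e, 0 < e -> exists d, 0 < d /\
    forall t, 0 <= t < T -> T - d < t -> Rabs (f t - l) < e.
Definition to_pinf_left (f : R -> R) (T : R) : Prop :=
  forall M, exists d, 0 < d /\ forall t, 0 <= t < T -> T - d < t -> M < f t.
Definition to_minf_left (f : R -> R) (T : R) : Prop :=
  to_pinf_left (fun t => - f t) T.

Definition to_lo_left (bnd : bool) (f : R -> R) (T : R) : Prop :=
  if bnd then lim_left f T (-1) else to_minf_left f T.
Definition to_hi_left (bnd : bool) (f : R -> R) (T : R) : Prop :=
  if bnd then lim_left f T 1 else to_pinf_left f T.

(* Energy [H(X, P)] is conserved along the flow. A maximal solution with finite [T] cannot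
   keep returning to a compact box of [K x R]: the vector field is bounded there, so the
   solution would converge as [t -> T], and Picard's local existence theorem at the limit
   would continue it. For [K = [-1, 1]] the continuation stays in [K], because (H4) forces
   [dH/dp < 0] at [x = 1] and [dH/dp > 0] at [x = -1].
   For [K = [-1, 1]] this makes [|P|] blow up with an eventual sign. Conservation of energy,
   coercivity (H3) on compacts of [K°], and convexity ([H(x, p) >= dH/dp(x, 0) p], which is
   large near the endpoint where [dH/dp(x, 0)] has the sign of [p]) then force [X] to the
   other endpoint. For [K = R] it makes [|X|] blow up with an eventual sign, and a Gronwall
   barrier at the levels [q_n] of (H5) shows that [P] follows [X] to the same infinity. *)

From Stdlib Require Import Reals Lra Lia Rtopology ClassicalEpsilon Classical List.
From Coquelicot Require Import Coquelicot.
Open Scope R_scope.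

Lemma mvt_abs_bound (f df : R -> R) (a b c e : R) :
  (forall y, Rmin a b <= y <= Rmax a b -> derivable_pt_lim f y (df y)) ->
  (forall y, Rmin a b <= y <= Rmax a b -> Rabs (df y - c) <= e) ->
  Rabs (f b - f a - c * (b - a)) <= e * Rabs (b - a).
Proof.
  assert (ordered : forall a b, a < b ->
    (forall y, a <= y <= b -> derivable_pt_lim f y (df y)) ->
    (forall y, a <= y <= b -> Rabs (df y - c) <= e) ->
    Rabs (f b - f a - c * (b - a)) <= e * (b - a)).
  { intros a' b' hab hd hb.
    destruct (MVT_cor2 (fun y => f y - c * y) (fun y => df y - c) a' b' hab)
      as [z [hz1 hz2]].
    { intros y hy. apply derivable_pt_lim_minus; [now apply hd|].
      replace c with (c * 1) at 2 by ring.
      apply derivable_pt_lim_scal, derivable_pt_lim_id. }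
    replace (f b' - f a' - c * (b' - a')) with ((df z - c) * (b' - a')) by lra.
    rewrite Rabs_mult, (Rabs_right (b' - a')) by lra.
    apply Rmult_le_compat_r; [lra|]. apply hb; lra. }
  intros hd hb. destruct (Rtotal_order a b) as [h|[<-|h]].
  - rewrite Rmin_left, Rmax_right in hd, hb by lra.
    rewrite (Rabs_right (b - a)) by lra. now apply ordered.
  - rewrite !Rminus_diag, Rabs_R0. rewrite Rmult_0_r, Rminus_0_r, Rabs_R0; lra.
  - rewrite Rmin_right, Rmax_left in hd, hb by lra.
    rewrite (Rabs_left (b - a)) by lra.
    replace (f b - f a - c * (b - a)) with (- (f a - f b - c * (a - b))) by ring.
    rewrite Rabs_Ropp. pose proof (ordered b a h hd hb). lra.
Qed.

Lemma lipschitz_of_deriv_bound (f df : R -> R) (a b M : R) :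
  (forall y, Rmin a b <= y <= Rmax a b -> derivable_pt_lim f y (df y)) ->
  (forall y, Rmin a b <= y <= Rmax a b -> Rabs (df y) <= M) ->
  Rabs (f b - f a) <= M * Rabs (b - a).
Proof.
  intros hd hb. replace (f b - f a) with (f b - f a - 0 * (b - a)) by ring.
  apply (mvt_abs_bound f df); [exact hd|].
  intros y hy. rewrite Rminus_0_r. now apply hb.
Qed.

Lemma derivable_pt_lim_continuity_pt (f : R -> R) x l :
  derivable_pt_lim f x l -> continuity_pt f x.
Proof. intro h. apply derivable_continuous_pt. now exists l. Qed.

Lemma continuity_pt_ball (g : R -> R) z e : continuity_pt g z -> 0 < e ->
  exists a, 0 < a /\ forall x, Rabs (x - z) < a -> Rabs (g x - g z) < e.
Proof.
  intros hc he. destruct (hc e he) as [a [ha ha']]. exists a. split; [exact ha|].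
  intros x hx. destruct (Req_dec x z) as [->|hxz].
  - rewrite Rminus_diag, Rabs_R0; lra.
  - apply (ha' x). split; [split; [exact I|auto]|exact hx].
Qed.

Lemma derivable_pt_lim_decreasing_right (f : R -> R) z l :
  derivable_pt_lim f z l -> l < 0 ->
  exists d, 0 < d /\ forall u, 0 < u < d -> f (z + u) < f z.
Proof.
  intros hd hl. destruct (hd (- l) ltac:(lra)) as [del hdel].
  exists del. split; [apply cond_pos|]. intros u hu.
  specialize (hdel u ltac:(lra) ltac:(rewrite Rabs_right; lra)).
  apply Rabs_def2 in hdel.
  assert (hq : (f (z + u) - f z) / u < 0) by lra.
  assert (f (z + u) - f z = (f (z + u) - f z) / u * u) by (field; lra).
  nra.
Qed.

Lemma stays_below_one (Y : R -> R) c :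
  derivable_pt_lim Y 0 c -> Y 0 <= 1 -> (Y 0 = 1 -> c < 0) ->
  exists d, 0 < d /\ forall u, 0 <= u < d -> Y u <= 1.
Proof.
  intros hd hY hc. destruct (Req_dec (Y 0) 1) as [e1|n1].
  - destruct (derivable_pt_lim_decreasing_right Y 0 c hd (hc e1)) as [d [hd0 hdec]].
    exists d. split; [exact hd0|]. intros u hu.
    destruct (Req_dec u 0) as [->|hu0]; [lra|].
    pose proof (hdec u ltac:(lra)) as h. rewrite Rplus_0_l in h. lra.
  - destruct (continuity_pt_ball Y 0 (1 - Y 0) (derivable_pt_lim_continuity_pt _ _ _ hd)
      ltac:(lra)) as [d [hd0 hball]].
    exists d. split; [exact hd0|]. intros u hu.
    specialize (hball u ltac:(rewrite Rminus_0_r, Rabs_right; lra)).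
    apply Rabs_def2 in hball. lra.
Qed.

Lemma stays_in_unit_interval (Y : R -> R) c :
  derivable_pt_lim Y 0 c -> -1 <= Y 0 <= 1 ->
  (Y 0 = 1 -> c < 0) -> (Y 0 = -1 -> 0 < c) ->
  exists d, 0 < d /\ forall u, 0 <= u < d -> -1 <= Y u <= 1.
Proof.
  intros hd hY h1 h2.
  destruct (stays_below_one Y c hd ltac:(lra) h1) as [d1 [hd1 hup]].
  destruct (stays_below_one (opp_fct Y) (- c) (derivable_pt_lim_opp _ _ _ hd)
    ltac:(unfold opp_fct; lra) ltac:(unfold opp_fct; intro; pose proof (h2 ltac:(lra)); lra))
    as [d2 [hd2 hlow]].
  exists (Rmin d1 d2). split; [now apply Rmin_pos|]. intros u hu.
  pose proof (Rmin_l d1 d2). pose proof (Rmin_r d1 d2).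
  pose proof (hup u ltac:(lra)). pose proof (hlow u ltac:(lra)). unfold opp_fct in *. lra.
Qed.

(** * Picard iteration *)

Definition lipschitz (M : R) (f : R -> R) : Prop :=
  forall t s, Rabs (f t - f s) <= M * Rabs (t - s).

Definition lipschitz2 (L : R) (F : R -> R -> R) : Prop :=
  forall x p y q, Rabs (F x p - F y q) <= L * (Rabs (x - y) + Rabs (p - q)).

Lemma lipschitz_continuous (M : R) (f : R -> R) z :
  0 <= M -> lipschitz M f -> continuous f z.
Proof.
  intros hM hf. apply continuity_pt_filterlim.
  intros e he. exists (e / (M + 1)). split; [apply Rdiv_lt_0_compat; lra|].
  intros s [_ hs]. simpl in *. unfold R_dist in *.
  eapply Rle_lt_trans; [apply hf|].
  apply Rle_lt_trans with (M * (e / (M + 1))); [apply Rmult_le_compat_l; lra|].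
  assert (0 < e / (M + 1)) by (apply Rdiv_lt_0_compat; lra).
  replace e with ((M + 1) * (e / (M + 1))) at 2 by (field; lra). nra.
Qed.

Lemma lipschitz_comp2 (L M : R) (F : R -> R -> R) (Y Q : R -> R) :
  0 <= L -> lipschitz2 L F -> lipschitz M Y -> lipschitz M Q ->
  lipschitz (2 * L * M) (fun s => F (Y s) (Q s)).
Proof.
  intros hL hF hY hQ t s. eapply Rle_trans; [apply hF|].
  pose proof (hY t s). pose proof (hQ t s). nra.
Qed.

Lemma lipschitz_minus (M N : R) (f g : R -> R) :
  lipschitz M f -> lipschitz N g -> lipschitz (M + N) (fun s => f s - g s).
Proof.
  intros hf hg t s.
  replace (f t - g t - (f s - g s)) with ((f t - f s) - (g t - g s)) by ring.
  eapply Rle_trans; [apply Rabs_triang|]. rewrite Rabs_Ropp.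
  pose proof (hf t s). pose proof (hg t s). lra.
Qed.

Lemma ex_RInt_of_continuous (g : R -> R) a b : (forall z, continuous g z) -> ex_RInt g a b.
Proof. intros hc. apply (ex_RInt_continuous (V := R_CompleteNormedModule)). intros; apply hc. Qed.

Lemma abs_RInt_le_const_abs (g : R -> R) a b M :
  (forall z, continuous g z) ->
  (forall z, Rmin a b <= z <= Rmax a b -> Rabs (g z) <= M) ->
  Rabs (RInt g a b) <= M * Rabs (b - a).
Proof.
  intros hc hb.
  assert (hex : forall u v, ex_RInt g u v) by (intros; now apply ex_RInt_of_continuous).
  destruct (Rle_dec a b) as [h|h].
  - rewrite Rmin_left, Rmax_right in hb by lra.
    rewrite (Rabs_right (b - a)), Rmult_comm by lra.
    now apply abs_RInt_le_const.
  - rewrite Rmin_right, Rmax_left in hb by lra.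
    rewrite (Rabs_left (b - a)) by lra.
    rewrite <- opp_RInt_swap by apply hex.
    change (Rabs (- RInt g b a) <= M * - (b - a)). rewrite Rabs_Ropp.
    replace (M * - (b - a)) with ((a - b) * M) by ring.
    apply abs_RInt_le_const; auto; lra.
Qed.

Lemma RInt_minus_origin (g : R -> R) a u v :
  (forall z, continuous g z) -> RInt g a u - RInt g a v = RInt g v u.
Proof.
  intros hc. assert (hex : forall a b, ex_RInt g a b) by (intros; now apply ex_RInt_of_continuous).
  rewrite <- (RInt_Chasles g v a u (hex _ _) (hex _ _)), <- (opp_RInt_swap g a v (hex _ _)).
  change (RInt g a u - RInt g a v = - RInt g a v + RInt g a u). ring.
Qed.

Lemma RInt_Rminus (f g : R -> R) a b :
  ex_RInt f a b -> ex_RInt g a b -> RInt f a b - RInt g a b = RInt (fun s => f s - g s) a b.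
Proof. intros hf hg. symmetry. exact (RInt_minus f g a b hf hg). Qed.

Definition clamp (a b z : R) : R := Rmax a (Rmin b z).

Lemma clamp_bounds a b z : a <= b -> a <= clamp a b z <= b.
Proof. intros h. unfold clamp, Rmax, Rmin. repeat destruct Rle_dec; lra. Qed.

Lemma clamp_id a b z : a <= z <= b -> clamp a b z = z.
Proof. intros h. unfold clamp, Rmax, Rmin. repeat destruct Rle_dec; lra. Qed.

Lemma clamp_nonexpansive a b z w : a <= b -> Rabs (clamp a b z - clamp a b w) <= Rabs (z - w).
Proof.
  intros h. unfold clamp, Rmax, Rmin.
  repeat destruct Rle_dec; unfold Rabs; repeat destruct Rcase_abs; lra.
Qed.

(* In the iteration [c] clamps the time to [[-d, d]], so that every iterate is globally
   Lipschitz. *)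
Definition picard_step (F : R -> R -> R) (c : R -> R) (x0 : R) (Y Q : R -> R) (t : R) : R :=
  x0 + RInt (fun s => F (Y s) (Q s)) 0 (c t).

Section PicardStep.

Variables (F : R -> R -> R) (c : R -> R) (x0 M L d : R).
Hypotheses (hM : 0 <= M) (hL : 0 <= L) (hF : lipschitz2 L F)
  (hFb : forall x p, Rabs (F x p) <= M)
  (hc_lip : forall t s, Rabs (c t - c s) <= Rabs (t - s))
  (hc_bd : forall t, Rabs (c t) <= d).

Lemma picard_integrand_continuous (Y Q : R -> R) z :
  lipschitz M Y -> lipschitz M Q -> continuous (fun s => F (Y s) (Q s)) z.
Proof.
  intros hY hQ. apply (lipschitz_continuous (2 * L * M)); [nra|].
  now apply lipschitz_comp2.
Qed.

Lemma picard_step_lipschitz (Y Q : R -> R) :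
  lipschitz M Y -> lipschitz M Q -> lipschitz M (picard_step F c x0 Y Q).
Proof.
  intros hY hQ t s. unfold picard_step.
  rewrite Rminus_plus_l_l.
  rewrite RInt_minus_origin by (intros; now apply picard_integrand_continuous).
  eapply Rle_trans; [apply abs_RInt_le_const_abs|].
  - intros; now apply picard_integrand_continuous.
  - intros; apply hFb.
  - apply Rmult_le_compat_l; auto.
Qed.

Lemma picard_step_bound (Y Q : R -> R) t :
  lipschitz M Y -> lipschitz M Q -> Rabs (picard_step F c x0 Y Q t - x0) <= M * d.
Proof.
  intros hY hQ. unfold picard_step.
  rewrite Rplus_minus_l.
  eapply Rle_trans; [apply abs_RInt_le_const_abs|].
  - intros; now apply picard_integrand_continuous.
  - intros; apply hFb.
  - rewrite Rminus_0_r. now apply Rmult_le_compat_l.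
Qed.

Lemma picard_step_contraction (Y Q Y' Q' : R -> R) D t :
  lipschitz M Y -> lipschitz M Q -> lipschitz M Y' -> lipschitz M Q' ->
  (forall s, Rabs (Y s - Y' s) + Rabs (Q s - Q' s) <= D) ->
  Rabs (picard_step F c x0 Y Q t - picard_step F c x0 Y' Q' t) <= L * D * d.
Proof.
  intros hY hQ hY' hQ' hD. unfold picard_step.
  assert (hcont : forall f, lipschitz (2 * L * M) f -> forall z, continuous f z).
  { intros f hf z. apply (lipschitz_continuous (2 * L * M)); [nra|exact hf]. }
  rewrite Rminus_plus_l_l.
  rewrite RInt_Rminus by (apply ex_RInt_of_continuous; intros; apply hcont;
                            now apply lipschitz_comp2).
  eapply Rle_trans; [apply abs_RInt_le_const_abs|].
  - intros z. apply (lipschitz_continuous (2 * L * M + 2 * L * M)); [nra|].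
    apply lipschitz_minus; now apply lipschitz_comp2.
  - intros z _. eapply Rle_trans; [apply hF|]. apply Rmult_le_compat_l; auto.
  - rewrite Rminus_0_r. pose proof (hD 0). pose proof (Rabs_pos (Y 0 - Y' 0)).
    pose proof (Rabs_pos (Q 0 - Q' 0)).
    apply Rmult_le_compat_l; [apply Rmult_le_pos; lra|apply hc_bd].
Qed.

Lemma picard_step_derivable (Y Q : R -> R) s :
  lipschitz M Y -> lipschitz M Q -> (forall t, Rabs t < d -> c t = t) -> Rabs s < d ->
  derivable_pt_lim (picard_step F c x0 Y Q) s (F (Y s) (Q s)).
Proof.
  intros hY hQ hc_id hs.
  assert (hint : forall z, continuous (fun s => F (Y s) (Q s)) z)
    by (intros; now apply picard_integrand_continuous).
  apply (derivable_pt_lim_locally_ext (fun t => x0 + RInt (fun s => F (Y s) (Q s)) 0 t)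
    _ _ (- d) d); [apply Rabs_def2 in hs; lra| |].
  { intros t ht. unfold picard_step. rewrite hc_id; [reflexivity|].
    apply Rabs_def1; lra. }
  replace (F (Y s) (Q s)) with (0 + F (Y s) (Q s)) by ring.
  apply (derivable_pt_lim_plus (fun _ => x0)); [apply derivable_pt_lim_const|].
  apply is_derive_Reals, (is_derive_RInt (fun s => F (Y s) (Q s)) _ 0); [|apply hint].
  exists (mkposreal 1 Rlt_0_1). intros t _.
  apply (RInt_correct (V := R_CompleteNormedModule)), ex_RInt_of_continuous, hint.
Qed.

End PicardStep.

Lemma le_of_le_geometric (a b K : R) : (forall k, a <= b + K * (/2)^k) -> a <= b.
Proof.
  intros h. apply Rnot_lt_le. intros hlt.
  assert (hK : 0 < K) by (specialize (h O); simpl in h; lra).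
  destruct (pow_lt_1_zero (/2) ltac:(rewrite Rabs_right; lra) ((a - b) / K)) as [N hN].
  { apply Rdiv_lt_0_compat; lra. }
  specialize (hN N (le_n _)). specialize (h N).
  rewrite Rabs_right in hN by (left; apply pow_lt; lra).
  apply (Rmult_lt_compat_l K) in hN; [|exact hK].
  replace (K * ((a - b) / K)) with (a - b) in hN by (field; lra). lra.
Qed.

Lemma geometric_increments_sum (u : nat -> R) C :
  (forall k, Rabs (u (S k) - u k) <= C * (/2)^k) ->
  forall m n, Rabs (u (m + n)%nat - u m) <= 2 * C * (/2)^m * (1 - (/2)^n).
Proof.
  intros h m n. induction n as [|n IH].
  - rewrite Nat.add_0_r, Rminus_diag, Rabs_R0. simpl. lra.
  - replace (m + S n)%nat with (S (m + n)) by lia.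
    replace (u (S (m + n)) - u m) with ((u (S (m + n)) - u (m + n)%nat) + (u (m + n)%nat - u m))
      by ring.
    eapply Rle_trans; [apply Rabs_triang|].
    pose proof (h (m + n)%nat). rewrite pow_add in *. simpl. lra.
Qed.

Lemma geometric_limit (u : nat -> R) C : 0 <= C ->
  (forall k, Rabs (u (S k) - u k) <= C * (/2)^k) ->
  { l | forall m, Rabs (l - u m) <= 2 * C * (/2)^m }.
Proof.
  intros hC h.
  assert (hb : forall m j, (m <= j)%nat -> Rabs (u j - u m) <= 2 * C * (/2)^m).
  { intros m j hj. replace j with (m + (j - m))%nat by lia.
    eapply Rle_trans; [now apply geometric_increments_sum|].
    pose proof (pow_lt (/2) m ltac:(lra)). pose proof (pow_lt (/2) (j - m) ltac:(lra)).
    assert (0 <= 2 * C * (/2)^m) by nra. nra. }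
  assert (hcauchy : Cauchy_crit u).
  { intros e he.
    destruct (pow_lt_1_zero (/2) ltac:(rewrite Rabs_right; lra) (e / (4 * C + 1)))
      as [N hN]; [apply Rdiv_lt_0_compat; lra|].
    exists N. intros n m hn hm. unfold R_dist.
    specialize (hN N (le_n _)). rewrite Rabs_right in hN by (left; apply pow_lt; lra).
    apply (Rmult_lt_compat_l (4 * C + 1)) in hN; [|lra].
    replace ((4 * C + 1) * (e / (4 * C + 1))) with e in hN by (field; lra).
    pose proof (hb N n hn). pose proof (hb N m hm).
    replace (u n - u m) with ((u n - u N) - (u m - u N)) by ring.
    eapply Rle_lt_trans; [apply Rabs_triang|]. rewrite Rabs_Ropp.
    pose proof (pow_lt (/2) N ltac:(lra)). nra. }
  destruct (Rcomplete.R_complete u hcauchy) as [l hl]. exists l. intros m.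
  apply le_epsilon. intros e he. destruct (hl e he) as [N hN].
  specialize (hN (Nat.max N m) ltac:(lia)). unfold R_dist in hN.
  specialize (hb m (Nat.max N m) ltac:(lia)).
  replace (l - u m) with ((u (Nat.max N m) - u m) - (u (Nat.max N m) - l)) by ring.
  eapply Rle_trans; [apply Rabs_triang|]. rewrite Rabs_Ropp. lra.
Qed.

Lemma lipschitz_of_geometric_limit (M C : R) (u : nat -> R -> R) (Z : R -> R) :
  (forall k, lipschitz M (u k)) -> (forall t m, Rabs (Z t - u m t) <= C * (/2)^m) ->
  lipschitz M Z.
Proof.
  intros hlip hZ t s. apply (le_of_le_geometric _ _ (2 * C)). intros m.
  pose proof (hZ t m). pose proof (hZ s m). pose proof (hlip m t s).
  replace (Z t - Z s) with ((Z t - u m t) + (u m t - u m s) + - (Z s - u m s)) by ring.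
  pose proof (Rabs_triang (Z t - u m t + (u m t - u m s)) (- (Z s - u m s))).
  pose proof (Rabs_triang (Z t - u m t) (u m t - u m s)).
  rewrite Rabs_Ropp in *. lra.
Qed.

Section PicardIteration.

Variables (F G : R -> R -> R) (x0 p0 M L d : R).
Hypotheses (hM : 0 <= M) (hL : 0 <= L) (hd : 0 < d) (hLd : 4 * L * d <= 1)
  (hF : lipschitz2 L F) (hG : lipschitz2 L G)
  (hFb : forall x p, Rabs (F x p) <= M) (hGb : forall x p, Rabs (G x p) <= M).

Let c := clamp (- d) d.

Let picard_pair (YQ : (R -> R) * (R -> R)) : (R -> R) * (R -> R) :=
  (picard_step F c x0 (fst YQ) (snd YQ), picard_step G c p0 (fst YQ) (snd YQ)).

Let iterate (k : nat) : (R -> R) * (R -> R) := Nat.iter k picard_pair (fun _ => x0, fun _ => p0).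

Lemma clamp_time_bound t : Rabs (c t) <= d.
Proof. apply (proj2 (Rabs_le_between _ _)), clamp_bounds. lra. Qed.

Lemma clamp_time_lipschitz t s : Rabs (c t - c s) <= Rabs (t - s).
Proof. apply clamp_nonexpansive. lra. Qed.

Lemma picard_iterate_lipschitz k : lipschitz M (fst (iterate k)) /\ lipschitz M (snd (iterate k)).
Proof.
  induction k as [|k [IH1 IH2]].
  - split; intros t s; simpl; rewrite Rminus_diag, Rabs_R0;
      apply Rmult_le_pos; [exact hM|apply Rabs_pos|exact hM|apply Rabs_pos].
  - split; simpl; apply (picard_step_lipschitz _ _ _ M L hM hL);
      auto using clamp_time_lipschitz.
Qed.

Lemma picard_iterate_increment k t :
  Rabs (fst (iterate (S k)) t - fst (iterate k) t) +
  Rabs (snd (iterate (S k)) t - snd (iterate k) t) <= 2 * M * d * (/2)^k.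
Proof.
  revert t. induction k as [|k IH]; intros t.
  - destruct (picard_iterate_lipschitz O) as [h1 h2].
    pose proof (picard_step_bound F c x0 M L d hM hL hF hFb clamp_time_bound _ _ t h1 h2).
    pose proof (picard_step_bound G c p0 M L d hM hL hG hGb clamp_time_bound _ _ t h1 h2).
    simpl in *. lra.
  - destruct (picard_iterate_lipschitz k) as [h1 h2].
    destruct (picard_iterate_lipschitz (S k)) as [h3 h4].
    pose proof (picard_step_contraction F c x0 M L d hM hL hF clamp_time_bound
      _ _ _ _ _ t h3 h4 h1 h2 IH).
    pose proof (picard_step_contraction G c p0 M L d hM hL hG clamp_time_bound
      _ _ _ _ _ t h3 h4 h1 h2 IH).
    change (iterate (S (S k))) with (picard_pair (iterate (S k))) in *.
    change (iterate (S k)) with (picard_pair (iterate k)) at 2 4.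
    simpl fst in *; simpl snd in *.
    pose proof (pow_lt (/2) k ltac:(lra)).
    assert (0 <= 2 * M * d * (/2)^k) by (apply Rmult_le_pos; [nra|lra]).
    assert (L * (2 * M * d * (/2)^k) * d <= /4 * (2 * M * d * (/2)^k)) by nra.
    simpl pow. lra.
Qed.

Lemma picard_limit_is_fixed (F' : R -> R -> R) z0 (proj : (R -> R) * (R -> R) -> R -> R)
    (Y Q Z : R -> R) C :
  lipschitz2 L F' -> lipschitz M Y -> lipschitz M Q ->
  (forall m, proj (iterate (S m)) = picard_step F' c z0 (fst (iterate m)) (snd (iterate m))) ->
  (forall t m, Rabs (fst (iterate m) t - Y t) + Rabs (snd (iterate m) t - Q t) <= C * (/2)^m) ->
  (forall t m, Rabs (Z t - proj (iterate m) t) <= C * (/2)^m) ->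
  forall t, Z t = picard_step F' c z0 Y Q t.
Proof.
  intros hF' hY hQ hstep hD hZ t.
  apply Rminus_diag_uniq, Rabs_eq_0, Rle_antisym; [|apply Rabs_pos].
  apply (le_of_le_geometric _ _ (C + L * C * d)). intros m.
  destruct (picard_iterate_lipschitz m) as [h1 h2].
  pose proof (picard_step_contraction F' c z0 M L d hM hL hF' clamp_time_bound
    _ _ _ _ _ t h1 h2 hY hQ (fun s => hD s m)).
  pose proof (hZ t (S m)) as hZm. rewrite hstep in hZm. simpl pow in hZm.
  replace (Z t - picard_step F' c z0 Y Q t) with
    ((Z t - picard_step F' c z0 (fst (iterate m)) (snd (iterate m)) t)
     + (picard_step F' c z0 (fst (iterate m)) (snd (iterate m)) t - picard_step F' c z0 Y Q t))
    by ring.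
  eapply Rle_trans; [apply Rabs_triang|].
  assert (0 <= C * (/2)^m) by (pose proof (hD t m); pose proof (Rabs_pos (fst (iterate m) t - Y t));
                               pose proof (Rabs_pos (snd (iterate m) t - Q t)); lra).
  lra.
Qed.

Lemma picard_fixed_point : exists Y Q : R -> R,
  lipschitz M Y /\ lipschitz M Q /\
  (forall t, Y t = picard_step F c x0 Y Q t) /\ (forall t, Q t = picard_step G c p0 Y Q t).
Proof.
  set (C := 2 * M * d). assert (hC : 0 <= C) by (unfold C; nra).
  assert (hinc1 : forall t k, Rabs (fst (iterate (S k)) t - fst (iterate k) t) <= C * (/2)^k).
  { intros t k. pose proof (picard_iterate_increment k t).
    pose proof (Rabs_pos (snd (iterate (S k)) t - snd (iterate k) t)). unfold C. lra. }
  assert (hinc2 : forall t k, Rabs (snd (iterate (S k)) t - snd (iterate k) t) <= C * (/2)^k).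
  { intros t k. pose proof (picard_iterate_increment k t).
    pose proof (Rabs_pos (fst (iterate (S k)) t - fst (iterate k) t)). unfold C. lra. }
  set (Y := fun t => proj1_sig (geometric_limit _ C hC (hinc1 t))).
  set (Q := fun t => proj1_sig (geometric_limit _ C hC (hinc2 t))).
  assert (hY : forall t m, Rabs (Y t - fst (iterate m) t) <= 2 * C * (/2)^m).
  { intros t m. unfold Y. destruct geometric_limit as [l hl]. apply hl. }
  assert (hQ : forall t m, Rabs (Q t - snd (iterate m) t) <= 2 * C * (/2)^m).
  { intros t m. unfold Q. destruct geometric_limit as [l hl]. apply hl. }
  assert (hYl : lipschitz M Y) by (apply (lipschitz_of_geometric_limit M (2 * C)
    (fun k => fst (iterate k))); [intros k; apply picard_iterate_lipschitz|exact hY]).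
  assert (hQl : lipschitz M Q) by (apply (lipschitz_of_geometric_limit M (2 * C)
    (fun k => snd (iterate k))); [intros k; apply picard_iterate_lipschitz|exact hQ]).
  assert (hD : forall t m, Rabs (fst (iterate m) t - Y t) + Rabs (snd (iterate m) t - Q t)
                          <= 4 * C * (/2)^m).
  { intros t m. pose proof (hY t m). pose proof (hQ t m).
    rewrite (Rabs_minus_sym (fst _ t)), (Rabs_minus_sym (snd _ t)). lra. }
  assert (hY4 : forall t m, Rabs (Y t - fst (iterate m) t) <= 4 * C * (/2)^m)
    by (intros t m; pose proof (hY t m); pose proof (pow_lt (/2) m ltac:(lra)); nra).
  assert (hQ4 : forall t m, Rabs (Q t - snd (iterate m) t) <= 4 * C * (/2)^m)
    by (intros t m; pose proof (hQ t m); pose proof (pow_lt (/2) m ltac:(lra)); nra).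
  exists Y, Q. split; [exact hYl|]. split; [exact hQl|]. split.
  - apply (picard_limit_is_fixed F x0 fst Y Q Y (4 * C)); auto.
  - apply (picard_limit_is_fixed G p0 snd Y Q Q (4 * C)); auto.
Qed.

End PicardIteration.

Lemma picard_existence_global (F G : R -> R -> R) x0 p0 M L d :
  0 <= M -> 0 <= L -> 0 < d -> 4 * L * d <= 1 -> lipschitz2 L F -> lipschitz2 L G ->
  (forall x p, Rabs (F x p) <= M) -> (forall x p, Rabs (G x p) <= M) ->
  exists Y Q : R -> R, Y 0 = x0 /\ Q 0 = p0 /\
    forall s, Rabs s < d -> Rabs (Y s - x0) <= M * d /\ Rabs (Q s - p0) <= M * d /\
      derivable_pt_lim Y s (F (Y s) (Q s)) /\ derivable_pt_lim Q s (G (Y s) (Q s)).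
Proof.
  intros hM hL hd hLd hF hG hFb hGb.
  destruct (picard_fixed_point F G x0 p0 M L d hM hL hd hLd hF hG hFb hGb)
    as [Y [Q [hYl [hQl [hYfix hQfix]]]]].
  set (ct := clamp (- d) d) in *.
  assert (hct : forall t, Rabs t < d -> ct t = t)
    by (intros t ht; apply clamp_id; apply Rabs_def2 in ht; lra).
  assert (hctb : forall t, Rabs (ct t) <= d)
    by (intros; apply (proj2 (Rabs_le_between _ _)), clamp_bounds; lra).
  assert (hstart : forall (F' : R -> R -> R) z0, picard_step F' ct z0 Y Q 0 = z0).
  { intros F' z0. unfold picard_step. rewrite hct by (rewrite Rabs_R0; lra).
    rewrite RInt_point. unfold zero; simpl. ring. }
  exists Y, Q. split; [rewrite hYfix; apply hstart|]. split; [rewrite hQfix; apply hstart|].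
  intros s hs.
  split; [rewrite hYfix; now apply (picard_step_bound F ct x0 M L d)|].
  split; [rewrite hQfix; now apply (picard_step_bound G ct p0 M L d)|].
  split.
  - apply (derivable_pt_lim_ext _ _ _ _ (fun t => eq_sym (hYfix t))).
    now apply (picard_step_derivable F ct x0 M L d).
  - apply (derivable_pt_lim_ext _ _ _ _ (fun t => eq_sym (hQfix t))).
    now apply (picard_step_derivable G ct p0 M L d).
Qed.

Lemma picard_local_existence (F G : R -> R -> R) x0 p0 r M L :
  0 < r -> 0 <= M -> 0 <= L ->
  (forall x p, Rabs (x - x0) <= r -> Rabs (p - p0) <= r ->
     Rabs (F x p) <= M /\ Rabs (G x p) <= M) ->
  (forall x p y q, Rabs (x - x0) <= r -> Rabs (p - p0) <= r ->
     Rabs (y - x0) <= r -> Rabs (q - p0) <= r ->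
     Rabs (F x p - F y q) <= L * (Rabs (x - y) + Rabs (p - q)) /\
     Rabs (G x p - G y q) <= L * (Rabs (x - y) + Rabs (p - q))) ->
  exists d, 0 < d /\ exists Y Q : R -> R, Y 0 = x0 /\ Q 0 = p0 /\
    forall s, Rabs s < d ->
      derivable_pt_lim Y s (F (Y s) (Q s)) /\ derivable_pt_lim Q s (G (Y s) (Q s)).
Proof.
  intros hr hM hL hbox hlip.
  (* Clamping the arguments to the box makes the fields globally bounded and Lipschitz. *)
  set (cx := clamp (x0 - r) (x0 + r)). set (cp := clamp (p0 - r) (p0 + r)).
  assert (hcx : forall x, Rabs (cx x - x0) <= r)
    by (intros; apply Rabs_le_between', clamp_bounds; lra).
  assert (hcp : forall p, Rabs (cp p - p0) <= r)
    by (intros; apply Rabs_le_between', clamp_bounds; lra).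
  assert (hcxl : forall x y, Rabs (cx x - cx y) <= Rabs (x - y))
    by (intros; apply clamp_nonexpansive; lra).
  assert (hcpl : forall x y, Rabs (cp x - cp y) <= Rabs (x - y))
    by (intros; apply clamp_nonexpansive; lra).
  set (Fc := fun x p => F (cx x) (cp p)). set (Gc := fun x p => G (cx x) (cp p)).
  assert (hFc : lipschitz2 L Fc /\ lipschitz2 L Gc).
  { split; intros x p y q; (eapply Rle_trans; [apply hlip; auto|]);
      apply Rmult_le_compat_l; auto; apply Rplus_le_compat; auto. }
  set (d := Rmin (r / (M + 1)) (/ (4 * (L + 1)))).
  assert (hd : 0 < d) by (apply Rmin_pos; [apply Rdiv_lt_0_compat|apply Rinv_0_lt_compat]; lra).
  assert (hMd : M * d <= r).
  { apply Rle_trans with ((M + 1) * (r / (M + 1))); [|right; field; lra].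
    apply Rmult_le_compat; try lra; [apply Rmin_l]. }
  assert (hLd : 4 * L * d <= 1).
  { apply Rle_trans with (4 * (L + 1) * / (4 * (L + 1))); [|right; field; lra].
    apply Rmult_le_compat; try lra; [apply Rmin_r]. }
  destruct (picard_existence_global Fc Gc x0 p0 M L d hM hL hd hLd (proj1 hFc) (proj2 hFc)
    ltac:(intros; apply hbox; auto) ltac:(intros; apply hbox; auto))
    as [Y [Q [hY0 [hQ0 hYQ]]]].
  exists d. split; [exact hd|]. exists Y, Q. split; [exact hY0|]. split; [exact hQ0|].
  intros s hs. destruct (hYQ s hs) as (hYs & hQs & dY & dQ).
  assert (hcY : cx (Y s) = Y s) by (apply clamp_id, Rabs_le_between'; lra).
  assert (hcQ : cp (Q s) = Q s) by (apply clamp_id, Rabs_le_between'; lra).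
  unfold Fc, Gc in dY, dQ. rewrite hcY, hcQ in dY, dQ. split; assumption.
Qed.

(** * Local existence for the Hamiltonian flow *)

Lemma between_in_ball c r a b y :
  Rabs (a - c) <= r -> Rabs (b - c) <= r -> Rmin a b <= y <= Rmax a b -> Rabs (y - c) <= r.
Proof.
  intros ha hb hy. apply Rabs_le_between' in ha, hb. apply Rabs_le_between'.
  unfold Rmin, Rmax in hy. destruct Rle_dec; lra.
Qed.

Lemma lipschitz_of_partials_on_box (g gx gp : R -> R -> R) x0 p0 r B :
  (forall a b, Rabs (a - x0) <= r -> Rabs (b - p0) <= r ->
     derivable_pt_lim (fun z => g z b) a (gx a b) /\
     derivable_pt_lim (fun z => g a z) b (gp a b) /\
     Rabs (gx a b) <= B /\ Rabs (gp a b) <= B) ->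
  forall x p y q, Rabs (x - x0) <= r -> Rabs (p - p0) <= r ->
    Rabs (y - x0) <= r -> Rabs (q - p0) <= r ->
    Rabs (g x p - g y q) <= B * (Rabs (x - y) + Rabs (p - q)).
Proof.
  intros hg x p y q hx hp hy hq.
  pose proof (lipschitz_of_deriv_bound (fun z => g z p) (fun z => gx z p) y x B
    ltac:(intros z hz; apply hg; [exact (between_in_ball x0 r y x z hy hx hz)|exact hp])
    ltac:(intros z hz; apply hg; [exact (between_in_ball x0 r y x z hy hx hz)|exact hp])).
  pose proof (lipschitz_of_deriv_bound (fun z => g y z) (fun z => gp y z) q p B
    ltac:(intros z hz; apply hg; [exact hy|exact (between_in_ball p0 r q p z hq hp hz)])
    ltac:(intros z hz; apply hg; [exact hy|exact (between_in_ball p0 r q p z hq hp hz)])).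
  replace (g x p - g y q) with ((g x p - g y p) + (g y p - g y q)) by ring.
  eapply Rle_trans; [apply Rabs_triang|]. lra.
Qed.

Definition near2 (x p : R) (P : R -> R -> Prop) : Prop :=
  exists d, 0 < d /\ forall y q, Rabs (y - x) < d -> Rabs (q - p) < d -> P y q.

Lemma near2_and x p (P Q : R -> R -> Prop) :
  near2 x p P -> near2 x p Q -> near2 x p (fun y q => P y q /\ Q y q).
Proof.
  intros [d1 [hd1 h1]] [d2 [hd2 h2]]. exists (Rmin d1 d2). split; [now apply Rmin_pos|].
  intros y q hy hq. pose proof (Rmin_l d1 d2). pose proof (Rmin_r d1 d2).
  split; [apply h1|apply h2]; lra.
Qed.

Lemma cont2_at_near_bounded U (g : R -> R -> R) x p :
  cont2_at U g x p -> near2 x p (fun y q => U y -> Rabs (g y q) <= Rabs (g x p) + 1).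
Proof.
  intros h. destruct (h 1 Rlt_0_1) as [d [hd h1]]. exists d. split; [exact hd|].
  intros y q hy hq hU. specialize (h1 y q hU hy hq).
  pose proof (Rabs_triang_inv (g y q) (g x p)). lra.
Qed.

Lemma C2_on_bounded_near U H Hx Hp Hxx Hxp Hpx Hpp x0 p0 :
  C2_on U H Hx Hp Hxx Hxp Hpx Hpp -> U x0 ->
  (exists rho, 0 < rho /\ forall y, Rabs (y - x0) < rho -> U y) ->
  exists r M L, 0 < r /\ 0 <= M /\ 0 <= L /\
    forall y q, Rabs (y - x0) <= r -> Rabs (q - p0) <= r ->
      U y /\ Rabs (Hp y q) <= M /\ Rabs (Hx y q) <= M /\
      Rabs (Hxx y q) <= L /\ Rabs (Hxp y q) <= L /\ Rabs (Hpx y q) <= L /\ Rabs (Hpp y q) <= L.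
Proof.
  intros hC hU0 [rho [hrho hopen]].
  destruct (hC x0 p0 hU0) as (_&_&_&_&_&_&_&cHx&cHp&cHxx&cHxp&cHpx&cHpp).
  destruct (near2_and _ _ _ _ (cont2_at_near_bounded _ _ _ _ cHp)
   (near2_and _ _ _ _ (cont2_at_near_bounded _ _ _ _ cHx)
   (near2_and _ _ _ _ (cont2_at_near_bounded _ _ _ _ cHxx)
   (near2_and _ _ _ _ (cont2_at_near_bounded _ _ _ _ cHxp)
   (near2_and _ _ _ _ (cont2_at_near_bounded _ _ _ _ cHpx)
     (cont2_at_near_bounded _ _ _ _ cHpp)))))) as [d [hd hb]].
  set (r := Rmin rho d / 2). pose proof (Rmin_l rho d). pose proof (Rmin_r rho d).
  pose proof (Rmin_pos rho d hrho hd).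
  assert (hpos : forall v, 0 <= Rabs v) by apply Rabs_pos.
  exists r, ((Rabs (Hp x0 p0) + 1) + (Rabs (Hx x0 p0) + 1)),
    ((Rabs (Hxx x0 p0) + 1) + (Rabs (Hxp x0 p0) + 1) +
     (Rabs (Hpx x0 p0) + 1) + (Rabs (Hpp x0 p0) + 1)).
  pose proof (hpos (Hp x0 p0)). pose proof (hpos (Hx x0 p0)). pose proof (hpos (Hxx x0 p0)).
  pose proof (hpos (Hxp x0 p0)). pose proof (hpos (Hpx x0 p0)). pose proof (hpos (Hpp x0 p0)).
  split; [unfold r; lra|]. split; [lra|]. split; [lra|].
  intros y q hy hq. assert (hUy : U y) by (apply hopen; unfold r in hy; lra).
  destruct (hb y q ltac:(unfold r in hy; lra) ltac:(unfold r in hq; lra))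
    as (b1&b2&b3&b4&b5&b6).
  specialize (b1 hUy). specialize (b2 hUy). specialize (b3 hUy). specialize (b4 hUy).
  specialize (b5 hUy). specialize (b6 hUy). repeat split; auto; lra.
Qed.

Lemma ham_local_existence U H Hx Hp Hxx Hxp Hpx Hpp x0 p0 :
  C2_on U H Hx Hp Hxx Hxp Hpx Hpp -> U x0 ->
  (exists rho, 0 < rho /\ forall y, Rabs (y - x0) < rho -> U y) ->
  exists d, 0 < d /\ exists Y Q : R -> R, Y 0 = x0 /\ Q 0 = p0 /\
    forall s, Rabs s < d ->
      derivable_pt_lim Y s (Hp (Y s) (Q s)) /\ derivable_pt_lim Q s (- Hx (Y s) (Q s)).
Proof.
  intros hC hU0 hopen.
  destruct (C2_on_bounded_near U H Hx Hp Hxx Hxp Hpx Hpp x0 p0 hC hU0 hopen)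
    as (r & M & L & hr & hM & hL & hbox).
  apply (picard_local_existence Hp (fun y q => - Hx y q) x0 p0 r M L hr hM hL).
  - intros y q hy hq. rewrite Rabs_Ropp. destruct (hbox y q hy hq) as (_&b1&b2&_). auto.
  - intros x p y q hx hp hy hq. split.
    + apply (lipschitz_of_partials_on_box Hp Hpx Hpp x0 p0 r); auto.
      intros a b ha hb. destruct (hbox a b ha hb) as (hUa&_&_&_&_&b5&b6).
      destruct (hC a b hUa) as (_&_&_&_&d5&d6&_). auto.
    + replace (- Hx x p - - Hx y q) with (- (Hx x p - Hx y q)) by ring. rewrite Rabs_Ropp.
      apply (lipschitz_of_partials_on_box Hx Hxx Hxp x0 p0 r); auto.
      intros a b ha hb. destruct (hbox a b ha hb) as (hUa&_&_&b3&b4&_).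
      destruct (hC a b hUa) as (_&_&d3&d4&_). auto.
Qed.

(** * Continuation beyond [T] *)

Definition glue (T : R) (f g : R -> R) (s : R) : R := if Rlt_dec s T then f s else g (s - T).

Lemma glue_left_eq T (f g : R -> R) s : s < T -> glue T f g s = f s.
Proof. intros h. unfold glue. destruct Rlt_dec; [reflexivity|lra]. Qed.

Lemma glue_right_eq T (f g : R -> R) s : T <= s -> glue T f g s = g (s - T).
Proof. intros h. unfold glue. destruct Rlt_dec; [lra|reflexivity]. Qed.

Lemma lim_left_pos f T l : 0 < T -> lim_left f T l ->
  forall e, 0 < e -> exists d, 0 < d /\ forall t, T - d < t < T -> Rabs (f t - l) < e.
Proof.
  intros hT h e he. destruct (h e he) as [d [hd hd']]. exists (Rmin d T).
  split; [now apply Rmin_pos|]. intros t ht.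
  pose proof (Rmin_l d T). pose proof (Rmin_r d T). apply hd'; lra.
Qed.

Lemma glue_derivable_left (f g : R -> R) T s l :
  s < T -> derivable_pt_lim f s l -> derivable_pt_lim (glue T f g) s l.
Proof.
  intros hs. apply (derivable_pt_lim_locally_ext _ _ _ (s - 1) T); [lra|].
  intros z hz. now rewrite glue_left_eq by lra.
Qed.

Lemma glue_derivable_right (f g : R -> R) T s l :
  T < s -> derivable_pt_lim g (s - T) l -> derivable_pt_lim (glue T f g) s l.
Proof.
  intros hs hg. apply (derivable_pt_lim_locally_ext (fun z => g (z - T)) _ _ T (s + 1)); [lra| |].
  - intros z hz. now rewrite glue_right_eq by lra.
  - intros e he. destruct (hg e he) as [del hdel]. exists del. intros h hh0 hh.
    replace (s + h - T) with (s - T + h) by ring. now apply hdel.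
Qed.

(* Mean value theorem on [[T + h, t]], with [t] so close to [T] that [f t] is close to [a]. *)
Lemma left_increment_estimate (f df : R -> R) T l a h e :
  h < 0 -> 0 <= e ->
  (forall t, T + h <= t < T -> derivable_pt_lim f t (df t)) ->
  (forall t, T + h <= t < T -> Rabs (df t - l) <= e) ->
  (forall eta, 0 < eta -> exists d, 0 < d /\ forall t, T - d < t < T -> Rabs (f t - a) < eta) ->
  Rabs (a - f (T + h) - l * - h) <= e * - h.
Proof.
  intros hh he hd hdf hf. apply le_epsilon. intros eta heta.
  set (eta' := eta / (1 + Rabs l)).
  assert (heta' : 0 < eta')
    by (unfold eta'; apply Rdiv_lt_0_compat; [auto|pose proof (Rabs_pos l); lra]).
  destruct (hf eta' heta') as [d2 [hd2 hd2']].
  set (t := T - Rmin (Rmin (d2 / 2) eta') (- h / 2)).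
  pose proof (Rmin_l (Rmin (d2 / 2) eta') (- h / 2)).
  pose proof (Rmin_r (Rmin (d2 / 2) eta') (- h / 2)).
  pose proof (Rmin_l (d2 / 2) eta'). pose proof (Rmin_r (d2 / 2) eta').
  assert (0 < Rmin (Rmin (d2 / 2) eta') (- h / 2)) by (repeat apply Rmin_pos; lra).
  pose proof (hd2' t ltac:(unfold t; lra)) as hft.
  pose proof (mvt_abs_bound f df (T + h) t l e) as hm.
  rewrite Rmin_left, Rmax_right in hm by (unfold t; lra).
  specialize (hm ltac:(intros; apply hd; unfold t in *; lra)
                 ltac:(intros; apply hdf; unfold t in *; lra)).
  rewrite (Rabs_right (t - (T + h))) in hm by (unfold t; lra).
  replace (a - f (T + h) - l * - h)
    with ((a - f t) + (f t - f (T + h) - l * (t - (T + h))) + l * (t - T)) by ring.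
  eapply Rle_trans; [apply Rabs_triang|].
  eapply Rle_trans; [apply Rplus_le_compat; [apply Rabs_triang|right; apply Rabs_mult]|].
  rewrite Rabs_minus_sym in hft. rewrite (Rabs_left (t - T)) by (unfold t; lra).
  assert (Rabs l * - (t - T) <= Rabs l * eta')
    by (apply Rmult_le_compat_l; [apply Rabs_pos|unfold t; lra]).
  assert (e * (t - (T + h)) <= e * - h) by (apply Rmult_le_compat_l; unfold t; lra).
  assert (eta' + Rabs l * eta' = eta) by (unfold eta'; field; pose proof (Rabs_pos l); lra).
  lra.
Qed.

Lemma glue_derivable_at (f g df : R -> R) T l a :
  (exists d0, 0 < d0 /\ forall t, T - d0 < t < T -> derivable_pt_lim f t (df t)) ->
  (forall e, 0 < e -> exists d, 0 < d /\ forall t, T - d < t < T -> Rabs (df t - l) < e) ->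
  (forall e, 0 < e -> exists d, 0 < d /\ forall t, T - d < t < T -> Rabs (f t - a) < e) ->
  derivable_pt_lim g 0 l -> g 0 = a -> derivable_pt_lim (glue T f g) T l.
Proof.
  intros [d0 [hd0 hfd]] hdf hf hg hg0 e he.
  destruct (hg e he) as [dg hdg].
  destruct (hdf (e / 2) ltac:(lra)) as [d1 [hd1 hd1']].
  assert (hdel : 0 < Rmin dg (Rmin d1 d0)) by (repeat apply Rmin_pos; auto; apply cond_pos).
  exists (mkposreal _ hdel). intros h hh0 hh. simpl in hh.
  pose proof (Rmin_l dg (Rmin d1 d0)). pose proof (Rmin_r dg (Rmin d1 d0)).
  pose proof (Rmin_l d1 d0). pose proof (Rmin_r d1 d0).
  rewrite (glue_right_eq T f g T), Rminus_diag, hg0 by lra.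
  destruct (Rlt_dec (T + h) T) as [hlt|hge].
  - apply Rabs_def2 in hh.
    assert (hbound : Rabs (a - f (T + h) - l * - h) <= e / 2 * - h).
    { apply (left_increment_estimate f df); try lra; [intros; apply hfd; lra| |exact hf].
      intros t ht. left. apply hd1'. lra. }
    rewrite glue_left_eq by exact hlt.
    replace ((f (T + h) - a) / h - l) with ((a - f (T + h) - l * - h) / (- h)) by (field; lra).
    unfold Rdiv. rewrite Rabs_mult, Rabs_inv, (Rabs_right (- h)) by lra.
    apply Rle_lt_trans with (e / 2 * - h * / - h).
    + apply Rmult_le_compat_r; [left; apply Rinv_0_lt_compat|]; lra.
    + replace (e / 2 * - h * / - h) with (e / 2) by (field; lra). lra.
  - rewrite glue_right_eq by lra. replace (T + h - T) with (0 + h) by ring.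
    rewrite <- hg0. apply hdg; auto; lra.
Qed.

Lemma Kdom_Udom bnd eps x : 0 < eps -> Kdom bnd x -> Udom bnd eps x.
Proof. destruct bnd; simpl; auto. lra. Qed.

Lemma Udom_open bnd eps x :
  Udom bnd eps x -> exists rho, 0 < rho /\ forall y, Rabs (y - x) < rho -> Udom bnd eps y.
Proof.
  destruct bnd; simpl; intros h.
  - exists (Rmin (x + 1 + eps) (1 + eps - x)). split; [apply Rmin_pos; lra|].
    intros y hy. apply Rabs_def2 in hy.
    pose proof (Rmin_l (x + 1 + eps) (1 + eps - x)).
    pose proof (Rmin_r (x + 1 + eps) (1 + eps - x)). lra.
  - exists 1. split; [lra|auto].
Qed.

Lemma cont2_at_left_limit U (g : R -> R -> R) X P T xh ph :
  0 < T -> cont2_at U g xh ph -> (forall t, 0 <= t < T -> U (X t)) ->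
  lim_left X T xh -> lim_left P T ph ->
  forall e, 0 < e -> exists d, 0 < d /\
    forall t, T - d < t < T -> Rabs (g (X t) (P t) - g xh ph) < e.
Proof.
  intros hT hc hU hX hP e he. destruct (hc e he) as [dl [hdl hdl']].
  destruct (lim_left_pos X T xh hT hX dl hdl) as [d1 [hd1 hd1']].
  destruct (lim_left_pos P T ph hT hP dl hdl) as [d2 [hd2 hd2']].
  exists (Rmin T (Rmin d1 d2)). split; [repeat apply Rmin_pos; auto|].
  intros t ht. pose proof (Rmin_l T (Rmin d1 d2)). pose proof (Rmin_r T (Rmin d1 d2)).
  pose proof (Rmin_l d1 d2). pose proof (Rmin_r d1 d2).
  apply hdl'; [apply hU|apply hd1'|apply hd2']; lra.
Qed.

Lemma ham_sol_glue bnd U Hx Hp x p T X P Y Q xh ph d :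
  0 < T -> 0 < d -> ham_sol bnd Hx Hp x p T X P ->
  (forall t, 0 <= t < T -> U (X t)) -> cont2_at U Hx xh ph -> cont2_at U Hp xh ph ->
  lim_left X T xh -> lim_left P T ph -> Y 0 = xh -> Q 0 = ph ->
  (forall s, Rabs s < d ->
     derivable_pt_lim Y s (Hp (Y s) (Q s)) /\ derivable_pt_lim Q s (- Hx (Y s) (Q s))) ->
  (forall u, 0 <= u < d -> Kdom bnd (Y u)) ->
  ham_sol bnd Hx Hp x p (T + d) (glue T X Y) (glue T P Q).
Proof.
  intros hT hd (hX0 & hP0 & hKd & hder & hrc) hU cHx cHp hlX hlP hY0 hQ0 hYQ hYK.
  assert (hd0 : Rabs 0 < d) by (rewrite Rabs_R0; exact hd).
  split; [now rewrite glue_left_eq|]. split; [now rewrite glue_left_eq|]. split.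
  { intros s hs. destruct (Rlt_dec s T).
    - rewrite glue_left_eq by lra. apply hKd. lra.
    - rewrite glue_right_eq by lra. apply hYK. lra. }
  split.
  - intros s hs. destruct (Rtotal_order s T) as [hlt|[->|hgt]].
    + rewrite !glue_left_eq by lra.
      destruct (hder s ltac:(lra)). split; now apply glue_derivable_left.
    + rewrite !glue_right_eq, Rminus_diag, hY0, hQ0 by lra.
      destruct (hYQ 0 hd0) as [dY dQ]. rewrite hY0, hQ0 in dY, dQ.
      split.
      * apply (glue_derivable_at X Y (fun t => Hp (X t) (P t)) T _ xh); auto.
        -- exists T. split; [exact hT|]. intros t ht. apply hder. lra.
        -- exact (cont2_at_left_limit U Hp X P T xh ph hT cHp hU hlX hlP).
        -- exact (lim_left_pos X T xh hT hlX).
      * apply (glue_derivable_at P Q (fun t => - Hx (X t) (P t)) T _ ph); auto.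
        -- exists T. split; [exact hT|]. intros t ht. apply hder. lra.
        -- intros e he. destruct (cont2_at_left_limit U Hx X P T xh ph hT cHx hU hlX hlP e he)
             as [d1 [hd1 hd1']].
           exists d1. split; [exact hd1|]. intros t ht.
           replace (- Hx (X t) (P t) - - Hx xh ph) with (- (Hx (X t) (P t) - Hx xh ph)) by ring.
           rewrite Rabs_Ropp. auto.
        -- exact (lim_left_pos P T ph hT hlP).
    + destruct (hYQ (s - T) ltac:(rewrite Rabs_right; lra)) as [dY dQ].
      rewrite !glue_right_eq by lra. split; now apply glue_derivable_right.
  - intros e he. destruct (hrc e he) as [d1 [hd1 hd1']].
    exists (Rmin d1 T). split; [now apply Rmin_pos|].
    intros s hs hs'. pose proof (Rmin_l d1 T). pose proof (Rmin_r d1 T).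
    rewrite !glue_left_eq by lra. apply hd1'; lra.
Qed.

Definition boundary_inward (bnd : bool) (Hp : R -> R -> R) : Prop :=
  bnd = true -> forall q, Hp 1 q < 0 /\ 0 < Hp (-1) q.

Lemma ham_maximal_no_left_limit bnd eps H Hx Hp Hxx Hxp Hpx Hpp x p T X P xh ph :
  0 < eps -> C2_on (Udom bnd eps) H Hx Hp Hxx Hxp Hpx Hpp -> boundary_inward bnd Hp ->
  0 < T -> ham_maximal bnd Hx Hp x p T X P -> Kdom bnd xh ->
  lim_left X T xh -> lim_left P T ph -> False.
Proof.
  intros he hC hin hT [hsol hnot] hK hlX hlP.
  assert (hUx : Udom bnd eps xh) by now apply Kdom_Udom.
  destruct (ham_local_existence _ H Hx Hp Hxx Hxp Hpx Hpp xh ph hC hUx (Udom_open _ _ _ hUx))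
    as [d [hd [Y [Q [hY0 [hQ0 hYQ]]]]]].
  assert (hYK : exists dk, 0 < dk /\ forall u, 0 <= u < dk -> Kdom bnd (Y u)).
  { destruct bnd; [|exists 1; split; [lra|intros; exact I]].
    destruct (hYQ 0 ltac:(rewrite Rabs_R0; lra)) as [dY _].
    apply (stays_in_unit_interval Y (Hp (Y 0) (Q 0)) dY); rewrite ?hY0; [exact hK| |];
      intros ->; rewrite hQ0; apply hin; reflexivity. }
  destruct hYK as [dk [hdk hYK]].
  destruct (hC xh ph hUx) as (_&_&_&_&_&_&_&cHx&cHp&_).
  apply hnot. exists (T + Rmin d dk), (glue T X Y), (glue T P Q).
  pose proof (Rmin_l d dk). pose proof (Rmin_r d dk).
  split; [pose proof (Rmin_pos d dk hd hdk); lra|].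
  apply (ham_sol_glue bnd (Udom bnd eps) Hx Hp x p T X P Y Q xh ph); auto.
  - now apply Rmin_pos.
  - intros t ht. apply Kdom_Udom; [exact he|]. apply hsol. exact ht.
  - intros s hs. apply hYQ. lra.
  - intros u hu. apply hYK. lra.
Qed.

(** * Leaving compact boxes *)

Lemma list_upper_bound {A : Type} (f : A -> R) (l : list A) :
  exists M, forall t, In t l -> f t <= M.
Proof.
  induction l as [|t0 l [M hM]]; [exists 0; intros t []|].
  exists (Rmax (f t0) M). intros t [<-|ht]; [apply Rmax_l|].
  eapply Rle_trans; [now apply hM|apply Rmax_r].
Qed.

Lemma cont2_bounded_on_rectangle U (g : R -> R -> R) a b c d :
  (forall x, a <= x <= b -> U x) -> (forall x p, U x -> cont2_at U g x p) ->
  exists M, forall x p, a <= x <= b -> c <= p <= d -> Rabs (g x p) <= M.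
Proof.
  intros hU hc.
  assert (hdelta : forall t : Compactness.Tn 2 R, exists del : posreal,
    U (fst t) -> forall y q, U y -> Rabs (y - fst t) < del -> Rabs (q - fst (snd t)) < del ->
      Rabs (g y q - g (fst t) (fst (snd t))) < 1).
  { intros [u [v []]]. simpl. destruct (classic (U u)) as [hu|hu].
    - destruct (hc u v hu 1 Rlt_0_1) as [del [hdel hdel']].
      exists (mkposreal _ hdel). intros _. exact hdel'.
    - exists (mkposreal 1 Rlt_0_1). intros h; contradiction. }
  apply choice in hdelta. destruct hdelta as [delta hdelta].
  destruct (NNPP _ (compactness_list 2 (a, (c, tt)) (b, (d, tt)) delta)) as [l hl].
  destruct (list_upper_bound (fun t : Compactness.Tn 2 R => Rabs (g (fst t) (fst (snd t))) + 1) l)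
    as [M hM].
  exists M. intros x p hx hp.
  destruct (hl (x, (p, tt))) as [[u [v []]] [hin [hb hcl]]]; [simpl; tauto|].
  simpl in hb, hcl. specialize (hM _ hin). simpl in hM.
  assert (Rabs (g x p - g u v) < 1).
  { apply (hdelta (u, (v, tt))); simpl; try tauto; apply hU; tauto. }
  pose proof (Rabs_triang_inv (g x p) (g u v)). lra.
Qed.

Lemma continuous_induction_bound (g : R -> R) t0 T1 K K' :
  t0 < T1 -> K' < K -> (forall s, t0 <= s < T1 -> continuity_pt g s) -> g t0 < K ->
  (forall s, t0 <= s < T1 -> (forall u, t0 <= u <= s -> g u <= K) -> g s <= K') ->
  forall s, t0 <= s < T1 -> g s <= K'.
Proof.
  intros hT hK hc hg0 hstep.
  set (B := fun s => t0 <= s /\ s < T1 /\ forall u, t0 <= u <= s -> g u <= K).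
  assert (hB0 : B t0) by (split; [lra|split; [lra|]]; intros u hu; replace u with t0; lra).
  destruct (completeness B (ex_intro _ T1 (fun s hs => Rlt_le _ _ (proj1 (proj2 hs))))
    (ex_intro _ t0 hB0)) as [sg [hub hlub]].
  assert (hsg0 : t0 <= sg) by now apply hub.
  assert (hsg1 : sg <= T1) by (apply hlub; intros s [_ [hs _]]; lra).
  assert (hbelow : forall u, t0 <= u < sg -> g u <= K).
  { intros u hu. destruct (classic (exists s, B s /\ u < s)) as [[s [[_ [_ hs]] hus]]|hn].
    - apply hs; lra.
    - exfalso. assert (hu' : is_upper_bound B u).
      { intros s hs. apply Rnot_lt_le. intros hlt. apply hn. now exists s. }
      pose proof (hlub u hu'). lra. }
  enough (hsgT : sg = T1) by (intros s hs; apply hstep; [exact hs|]; intros; apply hbelow; lra).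
  apply Rle_antisym; [exact hsg1|]. apply Rnot_lt_le. intros hlt.
  assert (hgs : g sg <= K).
  { destruct (Req_dec sg t0) as [->|hne0]; [lra|]. apply Rnot_lt_le. intros hgt.
    destruct (continuity_pt_ball g sg (g sg - K) (hc sg ltac:(lra)) ltac:(lra)) as [a [ha ha']].
    set (u := Rmax t0 (sg - a / 2)).
    assert (hu : t0 <= u < sg) by (unfold u, Rmax; destruct Rle_dec; lra).
    pose proof (hbelow u hu).
    specialize (ha' u ltac:(rewrite Rabs_left by lra; unfold u, Rmax; destruct Rle_dec; lra)).
    apply Rabs_def2 in ha'. lra. }
  assert (hgs' : g sg <= K').
  { apply hstep; [lra|]. intros u hu. destruct (Req_dec u sg) as [->|]; [exact hgs|].
    apply hbelow. lra. }
  destruct (continuity_pt_ball g sg (K - K') (hc sg ltac:(lra)) ltac:(lra)) as [a [ha ha']].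
  set (s' := Rmin (sg + a / 2) ((sg + T1) / 2)).
  assert (hs' : sg < s' < T1) by (unfold s', Rmin; destruct Rle_dec; lra).
  assert (hBs' : B s').
  { split; [lra|split; [lra|]]. intros u hu.
    destruct (Rlt_dec u sg) as [hl|hl]; [apply hbelow; lra|].
    specialize (ha' u ltac:(rewrite Rabs_right by lra; unfold s', Rmin in hu;
                            destruct Rle_dec in hu; lra)).
    apply Rabs_def2 in ha'. lra. }
  pose proof (hub s' hBs'). lra.
Qed.

Lemma lipschitz_left_limit (f : R -> R) t0 T M : t0 < T -> 0 <= M ->
  (forall s s', t0 <= s < T -> t0 <= s' < T -> Rabs (f s - f s') <= M * Rabs (s - s')) ->
  exists l, lim_left f T l.
Proof.
  intros hT hM hl.
  set (sq := fun k => T - (T - t0) * (/2)^k).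
  assert (hsq : forall k, t0 <= sq k < T).
  { intros k. unfold sq. pose proof (pow_lt (/2) k ltac:(lra)).
    assert ((/2)^k <= 1).
    { clear. induction k as [|k IHk]; simpl; [lra|]. pose proof (pow_lt (/2) k ltac:(lra)). nra. }
    nra. }
  set (C := M * (T - t0)). assert (hC : 0 <= C) by (unfold C; nra).
  assert (hstep : forall k, Rabs (f (sq (S k)) - f (sq k)) <= C * (/2)^k).
  { intros k. eapply Rle_trans; [apply hl; apply hsq|].
    unfold sq. simpl pow.
    replace (T - (T - t0) * (/ 2 * (/ 2) ^ k) - (T - (T - t0) * (/ 2) ^ k))
      with ((T - t0) * (/2)^k / 2) by field.
    assert (hw : 0 < (T - t0) * (/2)^k) by (pose proof (pow_lt (/2) k ltac:(lra)); nra).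
    unfold C. rewrite Rmult_assoc. set (w := (T - t0) * (/2)^k) in *.
    rewrite Rabs_right by lra. nra. }
  destruct (geometric_limit (fun k => f (sq k)) C hC hstep) as [l hlim].
  exists l. intros e he.
  destruct (pow_lt_1_zero (/2) ltac:(rewrite Rabs_right; lra) (e / (3 * C + 1))) as [N hN].
  { apply Rdiv_lt_0_compat; lra. }
  specialize (hN N (le_n _)). rewrite Rabs_right in hN by (left; apply pow_lt; lra).
  apply (Rmult_lt_compat_l (3 * C + 1)) in hN; [|lra].
  replace ((3 * C + 1) * (e / (3 * C + 1))) with e in hN by (field; lra).
  pose proof (pow_lt (/2) N ltac:(lra)).
  exists ((T - t0) * (/2)^N). split; [nra|]. intros t ht1 ht2.
  pose proof (hsq N). assert (hts : sq N <= t) by (unfold sq in *; lra).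
  pose proof (hlim N) as hlN. pose proof (hl t (sq N) ltac:(lra) ltac:(lra)) as hft.
  rewrite (Rabs_right (t - sq N)) in hft by lra.
  assert (M * (t - sq N) <= C * (/2)^N)
    by (unfold C, sq in *; apply Rle_trans with (M * ((T - t0) * (/2)^N)); nra).
  replace (f t - l) with ((f t - f (sq N)) - (l - f (sq N))) by ring.
  eapply Rle_lt_trans; [apply Rabs_triang|]. rewrite Rabs_Ropp. nra.
Qed.

Lemma lim_left_in_interval (f : R -> R) t0 T l lo hi : 0 <= t0 -> t0 < T -> lim_left f T l ->
  (forall s, t0 <= s < T -> lo <= f s <= hi) -> lo <= l <= hi.
Proof.
  intros h0 hT hl hb.
  assert (happrox : forall e, 0 < e -> lo - e <= l <= hi + e).
  { intros e he. destruct (hl e he) as [d [hd hd']].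
    set (t := Rmax t0 (T - d / 2)).
    assert (ht : t0 <= t < T /\ T - d < t) by (unfold t, Rmax; destruct Rle_dec; lra).
    pose proof (hd' t ltac:(lra) ltac:(lra)) as hft. pose proof (hb t ltac:(lra)).
    apply Rabs_def2 in hft. lra. }
  split; apply le_epsilon; intros e he; pose proof (happrox e he); lra.
Qed.

Definition eventually_before (T : R) (Q : R -> Prop) : Prop :=
  exists d, 0 < d /\ forall t, 0 <= t < T -> T - d < t -> Q t.

Lemma continuity_pt_abs_sub (f : R -> R) k s :
  continuity_pt f s -> continuity_pt (fun u => Rabs (f u - k)) s.
Proof.
  intros h. apply (continuity_pt_comp (fun u => f u - k) Rabs); [|apply Rcontinuity_abs].
  apply (continuity_pt_minus f (fun _ => k)); [exact h|apply continuity_pt_const].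
  intros ? ?; reflexivity.
Qed.

Lemma ham_sol_stays_near bnd Hx Hp x p T X P t0 rho M :
  ham_sol bnd Hx Hp x p T X P -> 0 < t0 < T -> 0 < rho -> 0 <= M ->
  (forall y q, Rabs (y - X t0) <= rho -> Rabs (q - P t0) <= rho ->
     Rabs (Hp y q) <= M /\ Rabs (Hx y q) <= M) ->
  2 * M * (T - t0) <= rho / 2 ->
  forall s, t0 <= s < T -> Rabs (X s - X t0) + Rabs (P s - P t0) <= rho / 2.
Proof.
  intros (_ & _ & _ & hder & _) ht0 hrho hM hbound hsmall.
  apply (continuous_induction_bound (fun s => Rabs (X s - X t0) + Rabs (P s - P t0)) t0 T rho);
    try lra.
  - intros s hs. destruct (hder s ltac:(lra)) as [dX dP].
    apply (continuity_pt_plus (fun u => Rabs (X u - X t0)) (fun u => Rabs (P u - P t0)));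
      apply continuity_pt_abs_sub; eapply derivable_pt_lim_continuity_pt; eauto.
  - rewrite !Rminus_diag, Rabs_R0. lra.
  - intros s hs hbefore.
    assert (hin : forall u, t0 <= u <= s ->
      Rabs (Hp (X u) (P u)) <= M /\ Rabs (- Hx (X u) (P u)) <= M).
    { intros u hu. specialize (hbefore u hu). rewrite Rabs_Ropp.
      pose proof (Rabs_pos (X u - X t0)). pose proof (Rabs_pos (P u - P t0)).
      apply hbound; lra. }
    pose proof (lipschitz_of_deriv_bound X (fun u => Hp (X u) (P u)) t0 s M) as hX.
    pose proof (lipschitz_of_deriv_bound P (fun u => - Hx (X u) (P u)) t0 s M) as hP.
    rewrite Rmin_left, Rmax_right in hX, hP by lra.
    specialize (hX ltac:(intros; apply hder; lra) ltac:(intros; apply hin; lra)).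
    specialize (hP ltac:(intros; apply hder; lra) ltac:(intros; apply hin; lra)).
    rewrite (Rabs_right (s - t0)) in hX, hP by lra.
    assert (M * (s - t0) <= M * (T - t0)) by (apply Rmult_le_compat_l; lra). lra.
Qed.

Lemma ham_sol_left_limits_near bnd Hx Hp x p T X P t0 rho M :
  ham_sol bnd Hx Hp x p T X P -> 0 < t0 < T -> 0 < rho -> 0 <= M ->
  (forall y q, Rabs (y - X t0) <= rho -> Rabs (q - P t0) <= rho ->
     Rabs (Hp y q) <= M /\ Rabs (Hx y q) <= M) ->
  2 * M * (T - t0) <= rho / 2 ->
  exists xh ph, lim_left X T xh /\ lim_left P T ph.
Proof.
  intros hsol ht0 hrho hM hbound hsmall.
  pose proof (ham_sol_stays_near _ _ _ _ _ _ _ _ _ _ _ hsol ht0 hrho hM hbound hsmall) as hnear.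
  destruct hsol as (_ & _ & _ & hder & _).
  assert (hin : forall u, t0 <= u < T ->
    Rabs (Hp (X u) (P u)) <= M /\ Rabs (- Hx (X u) (P u)) <= M).
  { intros u hu. specialize (hnear u hu). rewrite Rabs_Ropp.
    pose proof (Rabs_pos (X u - X t0)). pose proof (Rabs_pos (P u - P t0)).
    apply hbound; lra. }
  assert (hbetw : forall s s' u, t0 <= s < T -> t0 <= s' < T ->
    Rmin s' s <= u <= Rmax s' s -> t0 <= u < T)
    by (intros s s' u hs hs' hu; unfold Rmin, Rmax in hu; destruct Rle_dec; lra).
  destruct (lipschitz_left_limit X t0 T M ltac:(lra) hM) as [xh hxh].
  { intros s s' hs hs'. apply (lipschitz_of_deriv_bound X (fun u => Hp (X u) (P u)) s' s M);
      intros u hu; pose proof (hbetw s s' u hs hs' hu); [apply hder|apply hin]; lra. }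
  destruct (lipschitz_left_limit P t0 T M ltac:(lra) hM) as [ph hph].
  { intros s s' hs hs'. apply (lipschitz_of_deriv_bound P (fun u => - Hx (X u) (P u)) s' s M);
      intros u hu; pose proof (hbetw s s' u hs hs' hu); [apply hder|apply hin]; lra. }
  now exists xh, ph.
Qed.

Lemma ham_fields_bounded_on_rectangle bnd eps H Hx Hp Hxx Hxp Hpx Hpp a b c d :
  C2_on (Udom bnd eps) H Hx Hp Hxx Hxp Hpx Hpp -> (forall y, a <= y <= b -> Udom bnd eps y) ->
  exists M, 0 <= M /\ forall y q, a <= y <= b -> c <= q <= d ->
    Rabs (Hp y q) <= M /\ Rabs (Hx y q) <= M.
Proof.
  intros hC hU.
  destruct (cont2_bounded_on_rectangle _ Hp a b c d hU (fun y q hy => ltac:(apply (hC y q hy))))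
    as [M1 hM1].
  destruct (cont2_bounded_on_rectangle _ Hx a b c d hU (fun y q hy => ltac:(apply (hC y q hy))))
    as [M2 hM2].
  exists (Rmax (Rmax M1 M2) 0). split; [apply Rmax_r|]. intros y q hy hq.
  pose proof (hM1 y q hy hq). pose proof (hM2 y q hy hq).
  pose proof (Rmax_l (Rmax M1 M2) 0). pose proof (Rmax_l M1 M2). pose proof (Rmax_r M1 M2). lra.
Qed.

(* If the solution kept returning to the box, it would converge at [T] and could be
   continued beyond [T]. *)
Lemma ham_maximal_leaves_boxes bnd eps H Hx Hp Hxx Hxp Hpx Hpp x p T X P a b c d :
  0 < eps -> C2_on (Udom bnd eps) H Hx Hp Hxx Hxp Hpx Hpp -> boundary_inward bnd Hp ->
  0 < T -> ham_maximal bnd Hx Hp x p T X P -> Kdom bnd a -> Kdom bnd b ->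
  eventually_before T (fun t => ~ (a <= X t <= b /\ c <= P t <= d)).
Proof.
  intros he hC hin hT hmax ha hb. apply NNPP. intros hret.
  pose proof hmax as [hsol _]. pose proof hsol as (_ & _ & hKd & _ & _).
  set (rho := eps / 2). assert (hrho : 0 < rho) by (unfold rho; lra).
  destruct (ham_fields_bounded_on_rectangle bnd eps H Hx Hp Hxx Hxp Hpx Hpp
    (a - rho) (b + rho) (c - rho) (d + rho) hC
    ltac:(intros y hy; destruct bnd; simpl in *; unfold rho in hy; lra)) as [M [hM hMb]].
  set (eta := Rmin (T / 2) (rho / (4 * M + 1))).
  assert (heta : 0 < eta) by (apply Rmin_pos; [|apply Rdiv_lt_0_compat]; lra).
  assert (hex : exists t0, 0 <= t0 < T /\ T - eta < t0 /\ a <= X t0 <= b /\ c <= P t0 <= d).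
  { apply NNPP. intros hn. apply hret. exists eta. split; [exact heta|].
    intros t ht ht' hbox. apply hn. now exists t. }
  destruct hex as [t0 [ht0 [ht0' [hXt0 hPt0]]]].
  pose proof (Rmin_l (T / 2) (rho / (4 * M + 1))).
  pose proof (Rmin_r (T / 2) (rho / (4 * M + 1))). unfold eta in ht0'.
  assert (hsmall : 2 * M * (T - t0) <= rho / 2).
  { apply Rle_trans with (2 * M * (rho / (4 * M + 1))); [apply Rmult_le_compat_l; lra|].
    apply Rmult_le_reg_r with (4 * M + 1); [lra|].
    replace (2 * M * (rho / (4 * M + 1)) * (4 * M + 1)) with (2 * M * rho) by (field; lra).
    replace (rho / 2 * (4 * M + 1)) with (2 * M * rho + rho / 2) by field. lra. }
  destruct (ham_sol_left_limits_near bnd Hx Hp x p T X P t0 rho M hsol ltac:(lra) hrho hM)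
    as [xh [ph [hxh hph]]]; [|exact hsmall|].
  { intros y q hy hq. apply Rabs_le_between' in hy, hq. apply hMb; lra. }
  apply (ham_maximal_no_left_limit bnd eps H Hx Hp Hxx Hxp Hpx Hpp x p T X P xh ph); auto.
  destruct bnd; [|exact I].
  apply (lim_left_in_interval X t0 T xh); try lra; [exact hxh|].
  intros s hs. apply (hKd s). lra.
Qed.

(** * Convexity in [p] and the argmin condition (H4) *)

Section ConvexHamiltonian.

Variables (bnd : bool) (eps : R) (H Hx Hp Hxx Hxp Hpx Hpp : R -> R -> R).
Hypotheses (he : 0 < eps) (hC : C2_on (Udom bnd eps) H Hx Hp Hxx Hxp Hpx Hpp)
  (hpp : forall x p, Kdom bnd x -> 0 < Hpp x p).

Lemma H_derivable_p x q : Kdom bnd x -> derivable_pt_lim (fun z => H x z) q (Hp x q).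
Proof. intros hx. apply (hC x q (Kdom_Udom _ _ _ he hx)). Qed.

Lemma Hp_increasing x q1 q2 : Kdom bnd x -> q1 < q2 -> Hp x q1 < Hp x q2.
Proof.
  intros hx hq.
  destruct (MVT_cor2 (fun z => Hp x z) (fun z => Hpp x z) q1 q2 hq) as [c [hc _]].
  { intros; apply (hC x c (Kdom_Udom _ _ _ he hx)). }
  pose proof (hpp x c hx). nra.
Qed.

Lemma H_ge_tangent_at_0 x p : Kdom bnd x -> H x 0 = 0 -> Hp x 0 * p <= H x p.
Proof.
  intros hx h0. destruct (Rtotal_order p 0) as [h|[->|h]].
  - destruct (MVT_cor2 (fun z => H x z) (fun z => Hp x z) p 0 h) as [c [hc hc']].
    { intros; now apply H_derivable_p. }
    pose proof (Hp_increasing x c 0 hx ltac:(lra)). nra.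
  - rewrite h0. lra.
  - destruct (MVT_cor2 (fun z => H x z) (fun z => Hp x z) 0 p h) as [c [hc hc']].
    { intros; now apply H_derivable_p. }
    pose proof (Hp_increasing x 0 c hx ltac:(lra)). nra.
Qed.

Lemma Hp_argmin_eq0 x q : Kdom bnd x -> is_argmin H x q -> Hp x q = 0.
Proof.
  intros hx hmin. pose proof (H_derivable_p x q hx) as hd.
  rewrite <- (derive_pt_eq_0 _ _ _ (exist _ _ hd) hd).
  apply (deriv_minimum _ (q - 1) (q + 1)); [lra|lra|]. intros; apply hmin.
Qed.

Lemma Hp_sign_around_argmin x q q' : Kdom bnd x -> is_argmin H x q' ->
  (q < q' -> Hp x q < 0) /\ (q' < q -> 0 < Hp x q).
Proof.
  intros hx hmin. pose proof (Hp_argmin_eq0 x q' hx hmin).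
  split; intros hq;
    [pose proof (Hp_increasing x q q' hx hq)|pose proof (Hp_increasing x q' q hx hq)];
    lra.
Qed.

Hypotheses (h0 : CondH0 bnd H) (h3 : CondH3 bnd H) (h4 : CondH4 bnd H).

Lemma Kint_Kdom x : Kint bnd x -> Kdom bnd x.
Proof. destruct bnd; simpl; auto. lra. Qed.

Lemma argmin_exists x : Kint bnd x -> exists q, is_argmin H x q.
Proof.
  intros hx.
  assert (hpt : cpt_in_int bnd (fun c => x <= c <= x)).
  { split; [apply compact_P3|]. intros y hy. now replace y with x by lra. }
  destruct (proj1 h3 _ hpt 1) as [A hA].
  pose (A' := Rmax A 0 + 1).
  assert (hA' : A < A' /\ 0 < A')
    by (pose proof (Rmax_l A 0); pose proof (Rmax_r A 0); unfold A'; lra).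
  assert (hpos : forall p, A' < Rabs p -> 0 < H x p).
  { intros p hp. specialize (hA p x ltac:(lra) ltac:(lra)).
    apply (Rmult_lt_compat_r (Rabs p)) in hA; [|lra].
    unfold Rdiv in hA. rewrite Rmult_assoc, Rinv_l in hA by lra. lra. }
  destruct (continuity_ab_min (fun z => H x z) (- A') A' ltac:(lra)) as [q [hq _]].
  { intros c _. apply (derivable_pt_lim_continuity_pt _ _ _ (H_derivable_p x c (Kint_Kdom x hx))). }
  exists q. intros p. destruct (Rle_dec (Rabs p) A') as [hp|hp].
  - apply hq. apply Rabs_le_between in hp. lra.
  - pose proof (hq 0 ltac:(lra)). pose proof (hpos p ltac:(lra)).
    rewrite h0 in * by now apply Kint_Kdom. lra.
Qed.

Lemma Hp_neg_below_argmins y q :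
  Kint bnd y -> (forall q', is_argmin H y q' -> q < q') -> Hp y q < 0.
Proof.
  intros hy hesc. destruct (argmin_exists y hy) as [q' hq'].
  apply (Hp_sign_around_argmin y q q' (Kint_Kdom y hy) hq'), hesc, hq'.
Qed.

Lemma Hp_pos_above_argmins y q :
  Kint bnd y -> (forall q', is_argmin H y q' -> q' < q) -> 0 < Hp y q.
Proof.
  intros hy hesc. destruct (argmin_exists y hy) as [q' hq'].
  apply (Hp_sign_around_argmin y q q' (Kint_Kdom y hy) hq'), hesc, hq'.
Qed.

Lemma Hp_right_end_neg : bnd = true -> forall q, Hp 1 q < 0.
Proof.
  intros hb. pose proof h4 as h4'. rewrite hb in h4'.
  assert (hK : forall y, -1 <= y <= 1 -> Kdom bnd y) by (rewrite hb; simpl; tauto).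
  assert (hK1 : Kdom bnd 1) by (apply hK; lra).
  assert (hle : forall q, Hp 1 q <= 0).
  { intros q. apply Rnot_lt_le. intros hpos.
    destruct (proj2 h4' q) as [d [hd hesc]].
    destruct (hC 1 q (Kdom_Udom _ _ _ he hK1)) as (_&_&_&_&_&_&_&_&cHp&_).
    destruct (cHp (Hp 1 q) hpos) as [del [hdel hcont]].
    set (y := 1 - Rmin (Rmin d del) 1 / 2).
    assert (hm : 0 < Rmin (Rmin d del) 1) by (repeat apply Rmin_pos; lra).
    pose proof (Rmin_l (Rmin d del) 1). pose proof (Rmin_r (Rmin d del) 1).
    pose proof (Rmin_l d del). pose proof (Rmin_r d del).
    assert (hneg : Hp y q < 0).
    { apply Hp_neg_below_argmins; [rewrite hb; simpl; unfold y; lra|].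
      intros q' hq'. apply (hesc y); [unfold y; lra|exact hq']. }
    specialize (hcont y q ltac:(apply Kdom_Udom, hK; unfold y; lra)
      ltac:(rewrite Rabs_left; unfold y; lra) ltac:(rewrite Rminus_diag, Rabs_R0; lra)).
    apply Rabs_def2 in hcont. lra. }
  intros q. pose proof (Hp_increasing 1 q (q + 1) hK1 ltac:(lra)). pose proof (hle (q + 1)). lra.
Qed.

Lemma Hp_left_end_pos : bnd = true -> forall q, 0 < Hp (-1) q.
Proof.
  intros hb. pose proof h4 as h4'. rewrite hb in h4'.
  assert (hK : forall y, -1 <= y <= 1 -> Kdom bnd y) by (rewrite hb; simpl; tauto).
  assert (hK1 : Kdom bnd (-1)) by (apply hK; lra).
  assert (hge : forall q, 0 <= Hp (-1) q).
  { intros q. apply Rnot_lt_le. intros hneg.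
    destruct (proj1 h4' (- q)) as [d [hd hesc]].
    destruct (hC (-1) q (Kdom_Udom _ _ _ he hK1)) as (_&_&_&_&_&_&_&_&cHp&_).
    destruct (cHp (- Hp (-1) q) ltac:(lra)) as [del [hdel hcont]].
    set (y := -1 + Rmin (Rmin d del) 1 / 2).
    assert (hm : 0 < Rmin (Rmin d del) 1) by (repeat apply Rmin_pos; lra).
    pose proof (Rmin_l (Rmin d del) 1). pose proof (Rmin_r (Rmin d del) 1).
    pose proof (Rmin_l d del). pose proof (Rmin_r d del).
    assert (hpos : 0 < Hp y q).
    { apply Hp_pos_above_argmins; [rewrite hb; simpl; unfold y; lra|].
      intros q' hq'. pose proof (hesc y ltac:(unfold y; lra) q' hq'). lra. }
    specialize (hcont y q ltac:(apply Kdom_Udom, hK; unfold y; lra)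
      ltac:(rewrite Rabs_right; unfold y; lra) ltac:(rewrite Rminus_diag, Rabs_R0; lra)).
    apply Rabs_def2 in hcont. lra. }
  intros q. pose proof (Hp_increasing (-1) (q - 1) q hK1 ltac:(lra)). pose proof (hge (q - 1)).
  lra.
Qed.

Lemma condH_boundary_inward : boundary_inward bnd Hp.
Proof. intros hb q. split; [now apply Hp_right_end_neg|now apply Hp_left_end_pos]. Qed.

Lemma Hp_neg_far_right : bnd = false ->
  forall M, exists A, forall y q, A < y -> q <= M -> Hp y q < 0.
Proof.
  intros hb M. pose proof h4 as h4'. rewrite hb in h4'.
  destruct (proj2 h4' M) as [A hA]. exists A.
  intros y q hy hq. apply Hp_neg_below_argmins; [now rewrite hb|].
  intros q' hq'. pose proof (hA y hy q' hq'). lra.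
Qed.

Lemma Hp_pos_far_left : bnd = false ->
  forall M, exists A, forall y q, y < A -> - M <= q -> 0 < Hp y q.
Proof.
  intros hb M. pose proof h4 as h4'. rewrite hb in h4'.
  destruct (proj1 h4' M) as [A hA]. exists A.
  intros y q hy hq. apply Hp_pos_above_argmins; [now rewrite hb|].
  intros q' hq'. pose proof (hA y hy q' hq'). lra.
Qed.

End ConvexHamiltonian.

(** * Conservation of energy *)

Lemma derivable_pt_lim_remainder (f : R -> R) x l e : derivable_pt_lim f x l -> 0 < e ->
  exists d, 0 < d /\ forall h, Rabs h < d -> Rabs (f (x + h) - f x - l * h) <= e * Rabs h.
Proof.
  intros hd he. destruct (hd e he) as [d hdd]. exists d. split; [apply cond_pos|].
  intros h hh. destruct (Req_dec h 0) as [->|hh0].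
  - rewrite Rplus_0_r, Rminus_diag, Rmult_0_r, Rminus_0_r, Rabs_R0. lra.
  - specialize (hdd h hh0 hh).
    replace (f (x + h) - f x - l * h) with (((f (x + h) - f x) / h - l) * h) by (field; auto).
    rewrite Rabs_mult. apply Rmult_le_compat_r; [apply Rabs_pos|lra].
Qed.

Lemma differentiable_pt_lim_of_partials U (H Hx : R -> R -> R) x p lp :
  (exists rho, 0 < rho /\ forall y, Rabs (y - x) < rho -> U y) ->
  (forall y q, U y -> derivable_pt_lim (fun z => H z q) y (Hx y q)) ->
  cont2_at U Hx x p -> derivable_pt_lim (fun z => H x z) p lp ->
  differentiable_pt_lim H x p (Hx x p) lp.
Proof.
  intros [rho [hrho hU]] hdx hc hdp e.
  destruct (hc (e / 2) ltac:(destruct e; simpl; lra)) as [dc [hdc hdc']].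
  destruct (derivable_pt_lim_remainder _ p lp (e / 2) hdp ltac:(destruct e; simpl; lra))
    as [dp [hdp0 hdp']].
  assert (hdel : 0 < Rmin rho (Rmin dc dp)) by (repeat apply Rmin_pos; auto).
  exists (mkposreal _ hdel). intros u v hu hv. simpl in hu, hv.
  pose proof (Rmin_l rho (Rmin dc dp)). pose proof (Rmin_r rho (Rmin dc dp)).
  pose proof (Rmin_l dc dp). pose proof (Rmin_r dc dp).
  assert (hnear : forall z, Rmin x u <= z <= Rmax x u -> Rabs (z - x) <= Rabs (u - x)).
  { intros z hz. rewrite Rmin_comm, Rmax_comm in hz. now apply Rabs_le_between_min_max. }
  pose proof (mvt_abs_bound (fun z => H z v) (fun z => Hx z v) x u (Hx x p) (e / 2)) as hx.
  specialize (hx ltac:(intros z hz; apply hdx, hU; pose proof (hnear z hz); lra)).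
  specialize (hx ltac:(intros z hz; left; pose proof (hnear z hz);
                       apply hdc'; [apply hU|..]; lra)).
  specialize (hdp' (v - p) ltac:(lra)). replace (p + (v - p)) with v in hdp' by ring.
  replace (H u v - H x p - (Hx x p * (u - x) + lp * (v - p)))
    with ((H u v - H x v - Hx x p * (u - x)) + (H x v - H x p - lp * (v - p))) by ring.
  eapply Rle_trans; [apply Rabs_triang|].
  pose proof (Rmax_l (Rabs (u - x)) (Rabs (v - p))).
  pose proof (Rmax_r (Rabs (u - x)) (Rabs (v - p))). destruct e as [e he]. simpl in *. nra.
Qed.

Lemma ham_energy_conserved bnd eps H Hx Hp Hxx Hxp Hpx Hpp x p T X P t1 :
  0 < eps -> C2_on (Udom bnd eps) H Hx Hp Hxx Hxp Hpx Hpp ->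
  ham_sol bnd Hx Hp x p T X P -> 0 < t1 < T ->
  forall s, t1 <= s < T -> H (X s) (P s) = H (X t1) (P t1).
Proof.
  intros he hC (_ & _ & hKd & hder & _) ht1 s hs.
  assert (hd : forall u, 0 < u < T -> derivable_pt_lim (fun s => H (X s) (P s)) u 0).
  { intros u hu. destruct (hder u hu) as [dX dP].
    assert (hU : Udom bnd eps (X u)) by (apply Kdom_Udom, hKd; lra).
    replace 0 with (Hx (X u) (P u) * Hp (X u) (P u) + Hp (X u) (P u) * (- Hx (X u) (P u)))
      by ring.
    apply derivable_pt_lim_comp_2d; [|exact dX|exact dP].
    apply (differentiable_pt_lim_of_partials (Udom bnd eps)).
    - now apply Udom_open.
    - intros y q hy. apply (hC y q hy).
    - apply (hC (X u) (P u) hU).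
    - apply (hC (X u) (P u) hU). }
  pose proof (lipschitz_of_deriv_bound (fun s => H (X s) (P s)) (fun _ => 0) t1 s 0) as hl.
  rewrite Rmin_left, Rmax_right in hl by lra.
  specialize (hl ltac:(intros; apply hd; lra) ltac:(intros; rewrite Rabs_R0; lra)).
  rewrite Rmult_0_l in hl. apply Rminus_diag_uniq, Rabs_eq_0, Rle_antisym; [exact hl|].
  apply Rabs_pos.
Qed.

Lemma eventually_before_and T (Q1 Q2 : R -> Prop) :
  eventually_before T Q1 -> eventually_before T Q2 ->
  eventually_before T (fun t => Q1 t /\ Q2 t).
Proof.
  intros [d1 [hd1 h1]] [d2 [hd2 h2]]. exists (Rmin d1 d2). split; [now apply Rmin_pos|].
  intros t ht ht'. pose proof (Rmin_l d1 d2). pose proof (Rmin_r d1 d2).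
  split; [apply h1|apply h2]; auto; lra.
Qed.

Lemma eventually_before_mono T (Q1 Q2 : R -> Prop) :
  (forall t, 0 <= t < T -> Q1 t -> Q2 t) -> eventually_before T Q1 -> eventually_before T Q2.
Proof. intros himp [d [hd h]]. exists d. split; [exact hd|]. intros t ht ht'. auto. Qed.

Lemma eventually_before_since T (Q : R -> Prop) t1 :
  t1 < T -> (forall t, t1 <= t < T -> Q t) -> eventually_before T Q.
Proof. intros ht1 h. exists (T - t1). split; [lra|]. intros t ht ht'. apply h. lra. Qed.

Lemma eventually_pos_or_neg (f : R -> R) T :
  0 < T -> (forall s, 0 < s < T -> continuity_pt f s) ->
  eventually_before T (fun t => f t <> 0) ->
  eventually_before T (fun t => 0 < f t) \/ eventually_before T (fun t => f t < 0).
Proof.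
  intros hT hc [d [hd hnz]].
  set (t1 := Rmax (T / 2) (T - d / 2)).
  assert (ht1 : T / 2 <= t1 < T /\ T - d < t1) by (unfold t1, Rmax; destruct Rle_dec; lra).
  assert (hnz' : forall t, t1 <= t < T -> f t <> 0) by (intros; apply hnz; lra).
  assert (hpos : forall g : R -> R, (forall s, 0 < s < T -> continuity_pt g s) ->
    (forall t, t1 <= t < T -> g t <> 0) -> 0 < g t1 -> forall t, t1 <= t < T -> 0 < g t).
  { intros g hg hgnz hg1 t ht. apply Rnot_le_lt. intros hle.
    assert (hlt : g t < 0) by (pose proof (hgnz t ht); lra).
    destruct (Ranalysis5.IVT_interv (opp_fct g) t1 t) as [z [hz hz0]];
      unfold opp_fct in *; try lra.
    - intros a ha. apply continuity_pt_opp, hg. lra.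
    - destruct (Req_dec t t1) as [->|]; lra.
    - apply (hgnz z); lra. }
  destruct (Rtotal_order (f t1) 0) as [hneg|[hz|hpos1]].
  - right. apply (eventually_before_since T _ t1); [lra|]. intros t ht.
    pose proof (hpos (opp_fct f)) as h. unfold opp_fct in h.
    assert (0 < - f t); [|lra]. apply h; try lra.
    + intros s hs. apply continuity_pt_opp, hc, hs.
    + intros t' ht' h0. apply (hnz' t' ht'). lra.
  - exfalso. apply (hnz' t1); [lra|exact hz].
  - left. apply (eventually_before_since T _ t1); [lra|]. intros t ht. now apply hpos.
Qed.

Lemma abs_blowup_pinf_or_minf (f : R -> R) T :
  0 < T -> (forall s, 0 < s < T -> continuity_pt f s) ->
  (forall A, eventually_before T (fun t => A < Rabs (f t))) ->
  to_pinf_left f T \/ to_minf_left f T.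
Proof.
  intros hT hc hA.
  assert (hnz : eventually_before T (fun t => f t <> 0)).
  { apply (eventually_before_mono T (fun t => 0 < Rabs (f t))); [|apply hA].
    intros t _ h h0. rewrite h0, Rabs_R0 in h. lra. }
  destruct (eventually_pos_or_neg f T hT hc hnz) as [hpos|hneg]; [left|right]; intros M.
  - change (eventually_before T (fun t => M < f t)).
    eapply eventually_before_mono; [|exact (eventually_before_and T _ _ hpos (hA M))].
    intros t _ [h1 h2]. rewrite Rabs_right in h2; lra.
  - change (eventually_before T (fun t => M < - f t)).
    eapply eventually_before_mono; [|exact (eventually_before_and T _ _ hneg (hA M))].
    intros t _ [h1 h2]. rewrite Rabs_left in h2; lra.
Qed.

Lemma gronwall_nonpos (phi dphi : R -> R) a b L :
  a < b -> (forall u, a <= u <= b -> derivable_pt_lim phi u (dphi u)) ->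
  (forall u, a < u < b -> dphi u <= L * phi u) -> phi a <= 0 -> phi b <= 0.
Proof.
  intros hab hd hle ha.
  set (w := fun u => exp (- L * (u - a))).
  assert (hw : forall u, derivable_pt_lim w u (- L * w u)).
  { intros u. apply is_derive_Reals. unfold w. auto_derive; [easy|unfold Rminus; ring]. }
  destruct (MVT_cor2 (fun u => phi u * w u) (fun u => dphi u * w u + phi u * (- L * w u))
    a b hab) as [c [hc hc']].
  { intros u hu. apply (derivable_pt_lim_mult phi w); [now apply hd|apply hw]. }
  assert (hwpos : forall u, 0 < w u) by (intros; apply exp_pos).
  assert (hwa : w a = 1) by (unfold w; rewrite Rminus_diag, Rmult_0_r; apply exp_0).
  pose proof (hle c hc'). pose proof (hwpos c). pose proof (hwpos b).
  assert (phi b * w b <= 0); [|nra].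
  assert (h1 : (dphi c - L * phi c) * w c <= 0) by nra.
  assert (h2 : (dphi c - L * phi c) * w c * (b - a) <= 0) by nra.
  rewrite hwa in hc. nra.
Qed.

Lemma last_time_above (P : R -> R) q a b :
  a < b -> (forall u, a <= u <= b -> continuity_pt P u) -> q <= P a -> P b < q ->
  exists tau, a <= tau < b /\ P tau = q /\ forall u, tau < u <= b -> P u < q.
Proof.
  intros hab hc ha hb.
  set (S := fun u => a <= u <= b /\ q <= P u).
  destruct (completeness S (ex_intro _ b (fun u hu => proj2 (proj1 hu)))
    (ex_intro _ a (conj (conj (Rle_refl a) (Rlt_le _ _ hab)) ha))) as [tau [hub hlub]].
  assert (htau : a <= tau <= b)
    by (split; [apply hub; split; [lra|exact ha]|apply hlub; intros u [hu _]; lra]).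
  assert (hafter : forall u, tau < u <= b -> P u < q).
  { intros u hu. apply Rnot_le_lt. intros hq. pose proof (hub u ltac:(split; [lra|exact hq])).
    lra. }
  assert (hge : q <= P tau).
  { apply Rnot_lt_le. intros hlt. destruct (Req_dec tau a) as [->|hne]; [lra|].
    destruct (continuity_pt_ball P tau (q - P tau) (hc tau htau) ltac:(lra)) as [e [he he']].
    assert (hbound : is_upper_bound S (tau - Rmin e (tau - a) / 2)).
    { intros u [hu hqu]. apply Rnot_lt_le. intros hlt'.
      assert (u <= tau) by (apply hub; split; auto).
      pose proof (Rmin_l e (tau - a)).
      specialize (he' u ltac:(rewrite Rabs_left1; lra)). apply Rabs_def2 in he'. lra. }
    pose proof (hlub _ hbound). pose proof (Rmin_pos e (tau - a) he ltac:(lra)). lra. }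
  assert (htaub : tau < b) by (destruct (Req_dec tau b) as [->|]; lra).
  exists tau. split; [lra|]. split; [|exact hafter].
  apply Rle_antisym; [|exact hge]. apply Rnot_lt_le. intros hgt.
  destruct (continuity_pt_ball P tau (P tau - q) (hc tau htau) ltac:(lra)) as [e [he he']].
  set (u := tau + Rmin e (b - tau) / 2).
  pose proof (Rmin_l e (b - tau)). pose proof (Rmin_r e (b - tau)).
  pose proof (Rmin_pos e (b - tau) he ltac:(lra)).
  pose proof (hafter u ltac:(unfold u; lra)).
  specialize (he' u ltac:(rewrite Rabs_right; unfold u; lra)). apply Rabs_def2 in he'. lra.
Qed.

(* Gronwall's inequality for [q - P] after the last time [P] is above [q]. *)
Lemma barrier_from_below (G : R -> R -> R) (Y P : R -> R) q a b L :
  a < b -> 0 <= L ->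
  (forall u, a <= u <= b -> derivable_pt_lim P u (G (Y u) (P u))) ->
  (forall u, a <= u <= b -> 0 <= G (Y u) q) ->
  (forall u, a <= u <= b -> P u <= q -> Rabs (G (Y u) (P u) - G (Y u) q) <= L * (q - P u)) ->
  q <= P a -> q <= P b.
Proof.
  intros hab hL hd hG hlip ha. apply Rnot_lt_le. intros hb.
  destruct (last_time_above P q a b hab
    (fun u hu => derivable_pt_lim_continuity_pt _ _ _ (hd u hu)) ha hb)
    as [tau [htau [hPtau hafter]]].
  assert (hgron : q - P b <= 0).
  { apply (gronwall_nonpos (fun u => q - P u) (fun u => - G (Y u) (P u)) tau b L);
      [lra| |intros u hu|rewrite hPtau; lra].
    - intros u hu. replace (- G (Y u) (P u)) with (0 - G (Y u) (P u)) by ring.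
      apply (derivable_pt_lim_minus (fun _ => q) P);
        [apply derivable_pt_lim_const|apply hd; lra].
    - pose proof (hafter u ltac:(lra)). pose proof (hG u ltac:(lra)).
      specialize (hlip u ltac:(lra) ltac:(lra)). apply Rabs_le_between' in hlip. lra. }
  lra.
Qed.

Lemma position_blowup_reaches_level (X P : R -> R) (F : R -> R -> R) T q t1 :
  0 < t1 < T -> (forall s, 0 < s < T -> derivable_pt_lim X s (F (X s) (P s))) ->
  (forall t, t1 <= t < T -> P t < q -> F (X t) (P t) < 0) ->
  to_pinf_left X T -> exists t2, t1 <= t2 < T /\ q <= P t2.
Proof.
  intros ht1 hder hF hX. apply NNPP. intros hn.
  assert (hbelow : forall t, t1 <= t < T -> P t < q).
  { intros t ht. apply Rnot_le_lt. intros hq. apply hn. now exists t. }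
  destruct (hX (X t1)) as [d [hd hd']].
  set (t := Rmax ((t1 + T) / 2) (T - d / 2)).
  assert (ht : (t1 + T) / 2 <= t < T /\ T - d < t) by (unfold t, Rmax; destruct Rle_dec; lra).
  pose proof (hd' t ltac:(lra) ltac:(lra)).
  destruct (MVT_cor2 X (fun s => F (X s) (P s)) t1 t ltac:(lra)) as [c [hc hc']].
  { intros c hc. apply hder. lra. }
  pose proof (hF c ltac:(lra) (hbelow c ltac:(lra))). nra.
Qed.

Lemma momentum_stays_above_level (X P : R -> R) (G Gp : R -> R -> R) T q t2 :
  0 < t2 < T -> (forall s, 0 < s < T -> continuity_pt X s) ->
  (forall s, 0 < s < T -> derivable_pt_lim P s (G (X s) (P s))) ->
  (forall y z, derivable_pt_lim (fun w => G y w) z (Gp y z)) ->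
  (forall y z, cont2_at (fun _ => True) Gp y z) ->
  (forall t, t2 <= t < T -> 0 <= G (X t) q) -> q <= P t2 ->
  forall s, t2 <= s < T -> q <= P s.
Proof.
  intros ht2 hcX hdP hGd hGc hG hq s hs.
  destruct (Req_dec s t2) as [->|hne]; [exact hq|].
  assert (hcP : forall c, t2 <= c <= s -> continuity_pt P c)
    by (intros c hc; eapply derivable_pt_lim_continuity_pt, hdP; lra).
  destruct (continuity_ab_min X t2 s ltac:(lra) ltac:(intros; apply hcX; lra)) as [xm [hxm _]].
  destruct (continuity_ab_maj X t2 s ltac:(lra) ltac:(intros; apply hcX; lra)) as [xM [hxM _]].
  destruct (continuity_ab_min P t2 s ltac:(lra) hcP) as [pm [hpm _]].
  destruct (continuity_ab_maj P t2 s ltac:(lra) hcP) as [pM [hpM _]].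
  destruct (cont2_bounded_on_rectangle (fun _ => True) Gp (X xm) (X xM)
    (Rmin (P pm) q) (Rmax (P pM) q) (fun _ _ => I) (fun y z _ => hGc y z)) as [L0 hL0].
  apply (barrier_from_below G X P q t2 s (Rmax L0 0)); [lra|apply Rmax_r| | | |exact hq].
  - intros u hu. apply hdP. lra.
  - intros u hu. apply hG. lra.
  - intros u hu hPu. rewrite <- (Rabs_right (q - P u)) by lra.
    rewrite (Rabs_minus_sym q).
    apply (lipschitz_of_deriv_bound (fun z => G (X u) z) (fun z => Gp (X u) z) q (P u)).
    + intros; apply hGd.
    + intros z hz. rewrite Rmin_right, Rmax_left in hz by lra.
      eapply Rle_trans; [apply hL0|apply Rmax_l].
      * pose proof (hxm u hu). pose proof (hxM u hu). lra.
      * pose proof (hpm u hu). pose proof (hpM u hu).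
        pose proof (Rmin_l (P pm) q). pose proof (Rmax_r (P pM) q). lra.
Qed.

Lemma momentum_blowup_follows_position (X P : R -> R) (F G Gp : R -> R -> R) T
    (yq qq : nat -> R) :
  0 < T ->
  (forall s, 0 < s < T ->
     derivable_pt_lim X s (F (X s) (P s)) /\ derivable_pt_lim P s (G (X s) (P s))) ->
  (forall y q, derivable_pt_lim (fun z => G y z) q (Gp y q)) ->
  (forall y q, cont2_at (fun _ => True) Gp y q) ->
  cv_infty qq -> (forall n y, yq n <= y -> 0 <= G y (qq n)) ->
  (forall M, exists A, forall y q, A < y -> q <= M -> F y q < 0) ->
  to_pinf_left X T -> to_pinf_left P T.
Proof.
  intros hT hder hGd hGc hqq hG hfar hX M.
  destruct (hqq M) as [N hN]. specialize (hN N (le_n _)).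
  destruct (hfar (qq N)) as [A hA].
  destruct (hX (Rmax A (yq N))) as [d [hd hd']].
  set (t1 := Rmax (T / 2) (T - d / 2)).
  assert (ht1 : T / 2 <= t1 < T /\ T - d < t1) by (unfold t1, Rmax; destruct Rle_dec; lra).
  assert (hXfar : forall t, t1 <= t < T -> A < X t /\ yq N <= X t).
  { intros t ht. pose proof (hd' t ltac:(lra) ltac:(lra)).
    pose proof (Rmax_l A (yq N)). pose proof (Rmax_r A (yq N)). lra. }
  destruct (position_blowup_reaches_level X P F T (qq N) t1 ltac:(lra)
    (fun s hs => proj1 (hder s hs))
    (fun t ht hP => hA _ _ (proj1 (hXfar t ht)) (Rlt_le _ _ hP)) hX) as [t2 [ht2 hPt2]].
  apply (eventually_before_since T _ t2); [lra|]. intros s hs.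
  enough (qq N <= P s) by lra.
  apply (momentum_stays_above_level X P G Gp T (qq N) t2); auto; try lra.
  - intros u hu. apply (derivable_pt_lim_continuity_pt _ _ _ (proj1 (hder u hu))).
  - intros u hu. apply hder, hu.
  - intros t ht. apply hG, hXfar. lra.
Qed.

Lemma momentum_minf_follows_position (X P : R -> R) (F G Gp : R -> R -> R) T
    (yq qq : nat -> R) :
  0 < T ->
  (forall s, 0 < s < T ->
     derivable_pt_lim X s (F (X s) (P s)) /\ derivable_pt_lim P s (G (X s) (P s))) ->
  (forall y q, derivable_pt_lim (fun z => G y z) q (Gp y q)) ->
  (forall y q, cont2_at (fun _ => True) Gp y q) ->
  cv_infty (fun n => - qq n) -> (forall n y, y <= yq n -> G y (qq n) <= 0) ->
  (forall M, exists A, forall y q, y < A -> - M <= q -> 0 < F y q) ->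
  to_minf_left X T -> to_minf_left P T.
Proof.
  intros hT hder hGd hGc hqq hG hfar hX.
  apply (momentum_blowup_follows_position (fun t => - X t) (fun t => - P t)
    (fun y q => - F (- y) (- q)) (fun y q => - G (- y) (- q)) (fun y q => Gp (- y) (- q))
    T (fun n => - yq n) (fun n => - qq n) hT); auto.
  - intros s hs. destruct (hder s hs) as [dX dP]. rewrite !Ropp_involutive.
    split; now apply derivable_pt_lim_opp.
  - intros y q. replace (Gp (- y) (- q)) with (- (Gp (- y) (- q) * -1)) by ring.
    apply (derivable_pt_lim_opp (fun z => G (- y) (- z))).
    apply (derivable_pt_lim_comp (fun z => - z) (fun z => G (- y) z)); [|apply hGd].
    replace (-1) with (- 1) by ring. apply derivable_pt_lim_opp, derivable_pt_lim_id.
  - intros y q e he. destruct (hGc (- y) (- q) e he) as [d [hd hd']].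
    exists d. split; [exact hd|]. intros y' q' _ hy hq. apply hd'; [exact I|..];
      [replace (- y' - - y) with (- (y' - y)) by ring
      |replace (- q' - - q) with (- (q' - q)) by ring];
      now rewrite Rabs_Ropp.
  - intros n y hy. rewrite Ropp_involutive. pose proof (hG n (- y) ltac:(lra)). lra.
  - intros M. destruct (hfar M) as [A hA]. exists (- A). intros y q hy hq.
    pose proof (hA (- y) (- q) ltac:(lra) ltac:(lra)). lra.
Qed.

(** * The cases [K = [-1, 1]] and [K = R] *)

Lemma H_coercive_on_compact bnd (H : R -> R -> R) a b E :
  CondH3 bnd H -> Kint bnd a -> Kint bnd b ->
  exists A, forall y p, a <= y <= b -> A < Rabs p -> E < H y p.
Proof.
  intros [h3 _] ha hb.
  assert (hcpt : cpt_in_int bnd (fun y => a <= y <= b)).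
  { split; [apply compact_P3|]. intros y hy. destruct bnd; simpl in *; [lra|exact I]. }
  destruct (h3 _ hcpt 1) as [A hA]. exists (Rmax A (Rabs E)).
  intros y p hy hp. pose proof (Rmax_l A (Rabs E)). pose proof (Rmax_r A (Rabs E)).
  specialize (hA p y ltac:(lra) hy).
  apply (Rmult_lt_compat_r (Rabs p)) in hA; [|pose proof (Rabs_pos E); lra].
  unfold Rdiv in hA. rewrite Rmult_assoc, Rinv_l, Rmult_1_l, Rmult_1_r in hA
    by (pose proof (Rabs_pos E); lra).
  pose proof (Rle_abs E). lra.
Qed.

Lemma slope_bound_near_left_end (G : R -> R -> R) (slope : R -> R) :
  (forall e, 0 < e -> exists del, 0 < del /\
     forall y, -1 <= y <= -1 + del -> Rabs (slope y - slope (-1)) < e) ->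
  0 < slope (-1) -> (forall y p, -1 <= y <= 1 -> slope y * p <= G y p) ->
  exists c d, 0 < c /\ 0 < d /\ forall y p, -1 <= y <= -1 + d -> 0 <= p -> c * p <= G y p.
Proof.
  intros hcont hpos hG. destruct (hcont (slope (-1) / 2) ltac:(lra)) as [del [hdel hdel']].
  exists (slope (-1) / 2), (Rmin del 1). split; [lra|]. split; [apply Rmin_pos; lra|].
  intros y p hy hp. pose proof (Rmin_l del 1). pose proof (Rmin_r del 1).
  specialize (hdel' y ltac:(lra)). apply Rabs_def2 in hdel'.
  pose proof (hG y p ltac:(lra)). nra.
Qed.

Lemma momentum_pinf_forces_right_end (G : R -> R -> R) (X P : R -> R) T E :
  (forall t, 0 <= t < T -> -1 <= X t <= 1) ->
  eventually_before T (fun t => G (X t) (P t) = E) ->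
  (exists c d, 0 < c /\ 0 < d /\ forall y p, -1 <= y <= -1 + d -> 0 <= p -> c * p <= G y p) ->
  (forall a b, -1 < a -> a <= b -> b < 1 ->
     exists A, forall y p, a <= y <= b -> A < Rabs p -> E < G y p) ->
  to_pinf_left P T -> lim_left X T 1.
Proof.
  intros hK hE [c [d [hc [hd hlow]]]] hcoer hP e he.
  set (d' := Rmin d 1). set (e' := Rmin e 1 / 2).
  pose proof (Rmin_l d 1). pose proof (Rmin_r d 1). pose proof (Rmin_l e 1).
  pose proof (Rmin_r e 1). pose proof (Rmin_pos d 1 hd Rlt_0_1).
  pose proof (Rmin_pos e 1 he Rlt_0_1).
  destruct (hcoer (-1 + d') (1 - e') ltac:(unfold d'; lra) ltac:(unfold d', e'; lra)
    ltac:(unfold e'; lra)) as [A hA].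
  change (eventually_before T (fun t => Rabs (X t - 1) < e)).
  eapply eventually_before_mono;
    [|exact (eventually_before_and T _ _ hE (hP (Rmax (Rmax A (E / c)) 0)))].
  intros t ht [hGE hPt].
  pose proof (Rmax_l (Rmax A (E / c)) 0). pose proof (Rmax_r (Rmax A (E / c)) 0).
  pose proof (Rmax_l A (E / c)). pose proof (Rmax_r A (E / c)). pose proof (hK t ht).
  destruct (Rle_dec (X t) (-1 + d')) as [hl|hl].
  - exfalso. pose proof (hlow (X t) (P t) ltac:(unfold d' in *; lra) ltac:(lra)).
    assert (hq : E / c < P t) by lra.
    apply (Rmult_lt_compat_l c) in hq; [|exact hc].
    replace (c * (E / c)) with E in hq by (field; lra). lra.
  - destruct (Rle_dec (X t) (1 - e')) as [hr|hr].
    + exfalso. pose proof (hA (X t) (P t) ltac:(lra) ltac:(rewrite Rabs_right; lra)). lra.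
    + rewrite Rabs_left1 by lra. unfold e' in hr. lra.
Qed.

Lemma lim_left_opp (f : R -> R) T l : lim_left (fun t => - f t) T (- l) -> lim_left f T l.
Proof.
  intros h e he. destruct (h e he) as [d [hd hd']]. exists d. split; [exact hd|].
  intros t ht ht'. specialize (hd' t ht ht').
  replace (- f t - - l) with (- (f t - l)) in hd' by ring. now rewrite Rabs_Ropp in hd'.
Qed.

Section UnitInterval.

Variables (eps : R) (H Hx Hp Hxx Hxp Hpx Hpp : R -> R -> R).
Hypotheses (he : 0 < eps) (hC : C2_on (Udom true eps) H Hx Hp Hxx Hxp Hpx Hpp)
  (hpp : forall x p, Kdom true x -> 0 < Hpp x p)
  (h0 : CondH0 true H) (h3 : CondH3 true H) (h4 : CondH4 true H).

Lemma Hp_continuous_at_end e0 :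
  -1 <= e0 <= 1 -> forall e, 0 < e -> exists del, 0 < del /\
    forall y, -1 <= y <= 1 -> Rabs (y - e0) < del -> Rabs (Hp y 0 - Hp e0 0) < e.
Proof.
  intros he0 e hep.
  destruct (hC e0 0 ltac:(simpl; lra)) as (_&_&_&_&_&_&_&_&cHp&_).
  destruct (cHp e hep) as [del [hdel hdel']]. exists del. split; [exact hdel|].
  intros y hy hye. apply hdel'; [simpl; lra|exact hye|rewrite Rminus_diag, Rabs_R0; lra].
Qed.

Lemma H_ge_linear_near_left_end :
  exists c d, 0 < c /\ 0 < d /\ forall y p, -1 <= y <= -1 + d -> 0 <= p -> c * p <= H y p.
Proof.
  apply (slope_bound_near_left_end H (fun y => Hp y 0)).
  - intros e hep. destruct (Hp_continuous_at_end (-1) ltac:(lra) e hep) as [del [hdel hdel']].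
    exists (Rmin del 1 / 2). pose proof (Rmin_l del 1). pose proof (Rmin_r del 1).
    split; [pose proof (Rmin_pos del 1 hdel Rlt_0_1); lra|].
    intros y hy. apply hdel'; [lra|rewrite Rabs_right; lra].
  - apply (Hp_left_end_pos true eps H Hx Hp Hxx Hxp Hpx Hpp); auto.
  - intros y p hy. apply (H_ge_tangent_at_0 true eps H Hx Hp Hxx Hxp Hpx Hpp); auto.
Qed.

Lemma H_ge_linear_near_right_end :
  exists c d, 0 < c /\ 0 < d /\
    forall y p, -1 <= y <= -1 + d -> 0 <= p -> c * p <= H (- y) (- p).
Proof.
  apply (slope_bound_near_left_end (fun y p => H (- y) (- p)) (fun y => - Hp (- y) 0)).
  - intros e hep. destruct (Hp_continuous_at_end 1 ltac:(lra) e hep) as [del [hdel hdel']].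
    exists (Rmin del 1 / 2). pose proof (Rmin_l del 1). pose proof (Rmin_r del 1).
    split; [pose proof (Rmin_pos del 1 hdel Rlt_0_1); lra|]. intros y hy.
    replace (- (-1)) with 1 by ring.
    replace (- Hp (- y) 0 - - Hp 1 0) with (- (Hp (- y) 0 - Hp 1 0)) by ring.
    rewrite Rabs_Ropp. apply hdel'; [lra|rewrite Rabs_left1; lra].
  - replace (- (-1)) with 1 by ring.
    pose proof (Hp_right_end_neg true eps H Hx Hp Hxx Hxp Hpx Hpp he hC hpp h0 h3 h4
      eq_refl 0). lra.
  - intros y p hy.
    pose proof (H_ge_tangent_at_0 true eps H Hx Hp Hxx Hxp Hpx Hpp he hC hpp (- y) (- p)
      ltac:(simpl; lra) (h0 (- y) ltac:(simpl; lra))). lra.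
Qed.

Lemma H_large_on_interior_segments E a b :
  -1 < a -> a <= b -> b < 1 ->
  exists A, forall y p, a <= y <= b -> A < Rabs p -> E < H y p /\ E < H (- y) (- p).
Proof.
  intros ha hab hb.
  destruct (H_coercive_on_compact true H a b E h3 ltac:(simpl; lra) ltac:(simpl; lra))
    as [A1 hA1].
  destruct (H_coercive_on_compact true H (- b) (- a) E h3 ltac:(simpl; lra) ltac:(simpl; lra))
    as [A2 hA2].
  exists (Rmax A1 A2). intros y q hy hq. pose proof (Rmax_l A1 A2). pose proof (Rmax_r A1 A2).
  split; [apply hA1|apply hA2]; rewrite ?Rabs_Ropp; lra.
Qed.

Lemma momentum_abs_blowup x p T X P :
  0 < T -> ham_maximal true Hx Hp x p T X P ->
  forall B, eventually_before T (fun t => B < Rabs (P t)).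
Proof.
  intros hT hmax B. pose proof hmax as [(_ & _ & hK & _) _].
  eapply eventually_before_mono; [|apply (ham_maximal_leaves_boxes true eps H Hx Hp
    Hxx Hxp Hpx Hpp x p T X P (-1) 1 (- Rabs B) (Rabs B)); simpl; auto; try lra].
  - intros t ht hout. apply Rnot_le_lt. intros hle. apply hout. split; [apply hK, ht|].
    apply Rabs_le_between. pose proof (Rle_abs B). lra.
  - now apply (condH_boundary_inward true eps H Hx Hp Hxx Hxp Hpx Hpp).
Qed.

Lemma blowup_in_unit_interval x p T X P E :
  0 < T -> ham_maximal true Hx Hp x p T X P ->
  eventually_before T (fun t => H (X t) (P t) = E) ->
  (lim_left X T (-1) /\ to_minf_left P T) \/ (lim_left X T 1 /\ to_pinf_left P T).
Proof.
  intros hT hmax hE. pose proof hmax as [(_ & _ & hK & hder & _) _].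
  destruct (abs_blowup_pinf_or_minf P T hT
    (fun s hs => derivable_pt_lim_continuity_pt _ _ _ (proj2 (hder s hs)))
    (momentum_abs_blowup x p T X P hT hmax)) as [hPp|hPm]; [right|left]; (split; [|assumption]).
  - apply (momentum_pinf_forces_right_end H X P T E).
    + intros t ht. apply hK, ht.
    + exact hE.
    + exact H_ge_linear_near_left_end.
    + intros a b ha hab hb. destruct (H_large_on_interior_segments E a b ha hab hb) as [A hA].
      exists A. intros y q hy hq. now apply hA.
    + exact hPp.
  - apply lim_left_opp. replace (- (-1)) with 1 by ring.
    apply (momentum_pinf_forces_right_end (fun y p => H (- y) (- p))
      (fun t => - X t) (fun t => - P t) T E).
    + intros t ht. pose proof (hK t ht). simpl in *. lra.
    + eapply eventually_before_mono; [|exact hE]. intros t _. now rewrite !Ropp_involutive.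
    + exact H_ge_linear_near_right_end.
    + intros a b ha hab hb. destruct (H_large_on_interior_segments E a b ha hab hb) as [A hA].
      exists A. intros y q hy hq. now apply hA.
    + exact hPm.
Qed.

End UnitInterval.

Section RealLine.

Variables (eps : R) (H Hx Hp Hxx Hxp Hpx Hpp : R -> R -> R).
Hypotheses (he : 0 < eps) (hC : C2_on (Udom false eps) H Hx Hp Hxx Hxp Hpx Hpp)
  (hpp : forall x p, Kdom false x -> 0 < Hpp x p)
  (h0 : CondH0 false H) (h3 : CondH3 false H) (h4 : CondH4 false H).

Lemma position_abs_blowup x p T X P E :
  0 < T -> ham_maximal false Hx Hp x p T X P ->
  eventually_before T (fun t => H (X t) (P t) = E) ->
  forall A, eventually_before T (fun t => A < Rabs (X t)).
Proof.
  intros hT hmax hE A.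
  destruct (H_coercive_on_compact false H (- Rabs A) (Rabs A) E h3 I I) as [B hB].
  eapply eventually_before_mono; [|exact (eventually_before_and T _ _ hE
    (ham_maximal_leaves_boxes false eps H Hx Hp Hxx Hxp Hpx Hpp x p T X P
      (- Rabs A) (Rabs A) (- Rabs B) (Rabs B) he hC
      (condH_boundary_inward false eps H Hx Hp Hxx Hxp Hpx Hpp he hC hpp h0 h3 h4)
      hT hmax I I))].
  intros t _ [hEt hout]. apply Rnot_le_lt. intros hle.
  assert (hX : - Rabs A <= X t <= Rabs A)
    by (apply Rabs_le_between; pose proof (Rle_abs A); lra).
  assert (hP : B < Rabs (P t)).
  { apply Rnot_le_lt. intros hP. apply hout. split; [exact hX|].
    apply Rabs_le_between. pose proof (Rle_abs B). lra. }
  pose proof (hB _ _ hX hP). lra.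
Qed.

Hypothesis (h5 : CondH5 false Hx Hp).

Lemma blowup_on_real_line x p T X P E :
  0 < T -> ham_maximal false Hx Hp x p T X P ->
  eventually_before T (fun t => H (X t) (P t) = E) ->
  (to_minf_left X T /\ to_minf_left P T) \/ (to_pinf_left X T /\ to_pinf_left P T).
Proof.
  intros hT hmax hE. pose proof hmax as [(_ & _ & _ & hder & _) _].
  destruct h5 as [[yp [qp (_ & _ & hqp & _ & hGp)]] [ym [qm (_ & _ & hqm & _ & hGm)]]].
  assert (hdG : forall y q, derivable_pt_lim (fun z => - Hx y z) q (- Hxp y q))
    by (intros y q; apply (derivable_pt_lim_opp (fun z => Hx y z)), (hC y q I)).
  assert (hcG : forall y q, cont2_at (fun _ => True) (fun y q => - Hxp y q) y q).
  { intros y q e hep. destruct (hC y q I) as (_&_&_&_&_&_&_&_&_&_&cHxp&_).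
    destruct (cHxp e hep) as [d [hd hd']]. exists d. split; [exact hd|].
    intros y' q' _ hy hq. replace (- Hxp y' q' - - Hxp y q) with (- (Hxp y' q' - Hxp y q)) by ring.
    rewrite Rabs_Ropp. now apply hd'. }
  destruct (abs_blowup_pinf_or_minf X T hT
    (fun s hs => derivable_pt_lim_continuity_pt _ _ _ (proj1 (hder s hs)))
    (position_abs_blowup x p T X P E hT hmax hE)) as [hXp|hXm]; [right|left];
    (split; [assumption|]).
  - apply (momentum_blowup_follows_position X P Hp (fun y q => - Hx y q) (fun y q => - Hxp y q)
      T yp qp hT hder hdG hcG hqp).
    + intros n y hy. exact (hGp n y I hy).
    + exact (Hp_neg_far_right false eps H Hx Hp Hxx Hxp Hpx Hpp he hC hpp h0 h3 h4 eq_refl).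
    + exact hXp.
  - apply (momentum_minf_follows_position X P Hp (fun y q => - Hx y q) (fun y q => - Hxp y q)
      T ym qm hT hder hdG hcG hqm).
    + intros n y hy. exact (hGm n y I hy).
    + exact (Hp_pos_far_left false eps H Hx Hp Hxx Hxp Hpx Hpp he hC hpp h0 h3 h4 eq_refl).
    + exact hXm.
Qed.

End RealLine.

Lemma limits_at_nonpositive_time bnd (X P : R -> R) T :
  T <= 0 -> to_lo_left bnd X T /\ to_minf_left P T.
Proof.
  intros hT. split; [destruct bnd; simpl|]; intros M;
    (exists 1; split; [lra|intros t ht; lra]).
Qed.

Theorem mainTheorem10 (bnd : bool) (H Hx Hp : R -> R -> R)
  (hH : CondH bnd H Hx Hp)
  (x p T : R) (X P : R -> R)
  (hx : Kdom bnd x)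
  (hmax : ham_maximal bnd Hx Hp x p T X P) :
  (to_lo_left bnd X T /\ to_minf_left P T) \/
  (to_hi_left bnd X T /\ to_pinf_left P T).
Proof.
  destruct (Rle_dec T 0) as [hT0|hT]; [left; now apply limits_at_nonpositive_time|].
  apply Rnot_le_lt in hT.
  destruct hH as (h0 & (eps & Hxx & Hxp & Hpx & Hpp & he & hC & hpp) & _ & h3 & h4 & h5).
  assert (hE : eventually_before T (fun t => H (X t) (P t) = H (X (T / 2)) (P (T / 2)))).
  { apply (eventually_before_since T _ (T / 2)); [lra|]. intros t ht.
    apply (ham_energy_conserved bnd eps H Hx Hp Hxx Hxp Hpx Hpp x p T X P);
      [exact he|exact hC|apply hmax|lra|lra]. }
  destruct bnd.
  - exact (blowup_in_unit_interval eps H Hx Hp Hxx Hxp Hpx Hpp he hC hpp h0 h3 h4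
      x p T X P _ hT hmax hE).
  - exact (blowup_on_real_line eps H Hx Hp Hxx Hxp Hpx Hpp he hC hpp h0 h3 h4 h5
      x p T X P _ hT hmax hE).
Qed.
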